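(* Assume in addition that $R(A_3)$ is closed. Let $f\in R(A_2^* )$, $g\in R(A_1^* )$, $k\in K_2$, let $x\in\tilde D_2:=\{\xi\in D(A_2)\cap D(A_1^* ):A_2\xi\in D(A_2^* )\}$ be the unique solution of $A_2^*A_2x=f$, $A_1^*x=g$, $\pi_2x=k$, put $y:=A_2x$, and let $(\tilde x,\tilde y)\in H_2\times H_3$. Set $e:=x-\tilde x$, $h:=y-\tilde y$, $e_{A_1}:=\pi_{A_1}e$, $e_{A_2^*}:=\pi_{A_2^*}e$, $e_{K_2}:=\pi_2e$, $h_{A_2}:=\pi_{A_2}h$, $h_{A_3^*}:=\pi_{A_3^*}h$, $h_{K_3}:=\pi_3h$. Then: (i) $e=e_{A_1}+e_{K_2}+e_{A_2^*}\in R(A_1)\oplus K_2\oplus R(A_2^* )$, $h=h_{A_2}+h_{K_3}+h_{A_3^*}\in R(A_2)\oplus K_3\oplus R(A_3^* )$, with $\|e\|^2_{H_2}=\|e_{A_1}\|^2+\|e_{K_2}\|^2+\|e_{A_2^*}\|^2$ and $\|h\|^2_{H_3}=\|h_{A_2}\|^2+\|h_{K_3}\|^2+\|h_{A_3^*}\|^2$; (ii) $e_{A_1}=x_g-\pi_{A_1}\tilde x$ and $\|e_{A_1}\|^2_{H_2}=\min_{\zeta\in D(A_1^* )}\big(c_1\|A_1^*\zeta-g\|_{H_1}+\|\zeta-\tilde x\|_{H_2}\big)^2=\max_{\varphi\in D(A_1)}\big(2\langle g,\varphi\rangle_{H_1}-\langle2\tilde x+A_1\varphi,A_1\varphi\rangle_{H_2}\big)$,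 attained at $\hat\zeta:=e_{A_1}+\tilde x\in D(A_1^* )$ (with $A_1^*\hat\zeta=g$) resp. $\hat\varphi:=(\mathcal{A}_1)^{-1}e_{A_1}$; (iii) $e_{A_2^*}=\pi_{A_2^*}x-\pi_{A_2^*}\tilde x$ and $$\|e_{A_2^*}\|^2_{H_2}=\min_{\xi\in D(A_2)}\min_{\zeta\in D(A_2^* )}\big(c_2^2\|A_2^*\zeta-f\|_{H_2}+c_2\|\zeta-A_2\xi\|_{H_3}+\|\xi-\tilde x\|_{H_2}\big)^2=\min_{\xi\in D(A_2^*A_2)}\big(c_2^2\|A_2^*A_2\xi-f\|_{H_2}+\|\xi-\tilde x\|_{H_2}\big)^2$$ $$=\max_{\phi\in D(A_2^*A_2)}\big(2\langle f,\phi\rangle_{H_2}-\langle2\tilde x+A_2^*A_2\phi,A_2^*A_2\phi\rangle_{H_2}\big),$$ where the minima are attained at $\hat\xi:=e_{A_2^*}+\tilde x\in D(A_2^*A_2)$ (with $A_2\hat\xi=y$, $A_2^*A_2\hat\xi=f$) together with $\hat\zeta:=y\in D(A_2^* )$ (with $A_2^*\hat\zeta=f$), and the maximum at $\hat\phi:=(\mathcal{A}_2)^{-1}(\mathcal{A}_2^* )^{-1}e_{A_2^*}$; (iv) $e_{K_2}=k-\pi_2\tilde x$ and $\|e_{K_2}\|^2_{H_2}=\min_{\varphi\in D(A_1)}\min_{\phi\in D(A_2^* )}\|k-\tilde x+A_1\varphi+A_2^*\phi\|^2_{H_2}=\max_{\theta\in K_2}\langle2(k-\tilde x)-\theta,\theta\rangle_{H_2}$,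 attained at $\hat\varphi:=(\mathcal{A}_1)^{-1}\pi_{A_1}\tilde x$, $\hat\phi:=(\mathcal{A}_2^* )^{-1}\pi_{A_2^*}\tilde x$ (with $A_1\hat\varphi+A_2^*\hat\phi=(1-\pi_2)\tilde x$) resp. $\hat\theta:=e_{K_2}$; (v) $h_{A_2}=y-\pi_{A_2}\tilde y$ and $\|h_{A_2}\|^2_{H_3}=\min_{\zeta\in D(A_2^* )}\big(c_2\|A_2^*\zeta-f\|_{H_2}+\|\zeta-\tilde y\|_{H_3}\big)^2=\max_{\varphi\in D(A_2)}\big(2\langle f,\varphi\rangle_{H_2}-\langle2\tilde y+A_2\varphi,A_2\varphi\rangle_{H_3}\big)$, attained at $\hat\zeta:=h_{A_2}+\tilde y\in D(A_2^* )$ (with $A_2^*\hat\zeta=f$) resp. $\hat\varphi:=(\mathcal{A}_2)^{-1}h_{A_2}$; (vi) $h_{A_3^*}=-\pi_{A_3^*}\tilde y$ and $\|h_{A_3^*}\|^2_{H_3}=\min_{\xi\in D(A_3)}\big(c_3\|A_3\xi\|_{H_4}+\|\xi-\tilde y\|_{H_3}\big)^2=\min_{\xi\in N(A_3)}\|\xi-\tilde y\|^2_{H_3}=\max_{\phi\in D(A_3^* )}\big(-\langle2\tilde y+A_3^*\phi,A_3^*\phi\rangle_{H_3}\big)$, attained at $\hat\xi:=h_{A_3^*}+\tilde y\in N(A_3)$ resp. $\hat\phi:=(\mathcal{A}_3^* )^{-1}h_{A_3^*}$; (vii) $h_{K_3}=-\pi_3\tilde y$ and $\|h_{K_3}\|^2_{H_3}=\min_{\varphi\in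 D(A_2)}\min_{\phi\in D(A_3^* )}\|-\tilde y+A_2\varphi+A_3^*\phi\|^2_{H_3}=\max_{\theta\in K_3}\big(-\langle2\tilde y+\theta,\theta\rangle_{H_3}\big)$, attained at $\hat\varphi:=(\mathcal{A}_2)^{-1}\pi_{A_2}\tilde y$, $\hat\phi:=(\mathcal{A}_3^* )^{-1}\pi_{A_3^*}\tilde y$ (with $A_2\hat\varphi+A_3^*\hat\phi=(1-\pi_3)\tilde y$) resp. $\hat\theta:=h_{K_3}$. If $\tilde x=k+\tilde x_\perp$ with $\tilde x_\perp\in K_2^\perp$, then $e_{K_2}=0$ and in (ii), (iii) $\tilde x$ can be replaced by $\tilde x_\perp$. If $\tilde y\in K_3^\perp$, then $h_{K_3}=0$ (and in (v), (vi) $\tilde y$ may be replaced by its $K_3^\perp$ component, i.e. by itself).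
   Context: Let $H_0,\dots,H_4$ be Hilbert spaces and, for $\ell=0,\dots,3$, $A_\ell:D(A_\ell)\subset H_\ell\to H_{\ell+1}$ densely defined closed linear operators with Hilbert space adjoints $A_\ell^*$, satisfying $R(A_\ell)\subset N(A_{\ell+1})$ for $\ell=0,1,2$. Standing assumption: $R(A_1)$, $R(A_2)$ closed and $K_2$ finite dimensional. $K_\ell:=N(A_\ell)\cap N(A_{\ell-1}^* )$, $\pi_\ell:H_\ell\to K_\ell$ orthogonal projectors ($\ell=2,3$); $\pi_{A_1},\pi_{A_2^*}$ orthogonal projectors of $H_2$ onto $R(A_1),R(A_2^* )$; $\pi_{A_2},\pi_{A_3^*}$ orthogonal projectors of $H_3$ onto $R(A_2),R(A_3^* )$. Reduced operators $\mathcal{A}_\ell:=A_\ell|_{D(A_\ell)\cap R(A_\ell^* )}$, $\mathcal{A}_\ell^*:=A_\ell^*|_{D(A_\ell^* )\cap R(A_\ell)}$ (injective). $x_g:=(\mathcal{A}_1^* )^{-1}g$. $c_\ell\in(0,\infty)$ is the best constant with $\|x\|_{H_\ell}\le c_\ell\|A_\ell x\|_{H_{\ell+1}}$ for all $x\in D(\mathcal{A}_\ell)$, $\ell=1,2,3$. $D(A_2^*A_2):=\{\xi\in D(A_2):A_2\xi\in D(A_2^* )\}$ and $D(\mathcal{A}_2^*\mathcal{A}_2)$ analogously. *)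

From HB Require Import structures.
From mathcomp Require Import all_boot all_order all_algebra.
From mathcomp Require Import reals.
Set Implicit Arguments. Unset Strict Implicit. Unset Printing Implicit Defensive.
Import Order.TTheory GRing.Theory Num.Theory.
Local Open Scope ring_scope.

Definition is_inner {R : realType} {V : lmodType R} (ip : V -> V -> R) : Prop :=
  (forall x y, ip x y = ip y x) /\
  (forall a x y z, ip (a *: x + y) z = a * ip x z + ip y z) /\
  (forall x, 0 <= ip x x) /\
  (forall x, ip x x = 0 -> x = 0).

Definition hnorm {R : realType} {V : lmodType R} (ip : V -> V -> R) (x : V) : R :=
  Num.sqrt (ip x x).

Definition converges {R : realType} {V : lmodType R} (ip : V -> V -> R)
  (u : nat -> V) (l : V) : Prop :=
  forall eps : R, 0 < eps -> exists N : nat, forall n, (N <= n)%N -> hnorm ip (u n - l) < eps.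

Definition cauchy_seq {R : realType} {V : lmodType R} (ip : V -> V -> R)
  (u : nat -> V) : Prop :=
  forall eps : R, 0 < eps -> exists N : nat,
    forall m n, (N <= m)%N -> (N <= n)%N -> hnorm ip (u m - u n) < eps.

Definition complete_ip {R : realType} {V : lmodType R} (ip : V -> V -> R) : Prop :=
  forall u, cauchy_seq ip u -> exists l, converges ip u l.

Definition is_hilbert {R : realType} {V : lmodType R} (ip : V -> V -> R) : Prop :=
  is_inner ip /\ complete_ip ip.

Definition subspace {R : realType} {V : lmodType R} (S : V -> Prop) : Prop :=
  S 0 /\ forall a x y, S x -> S y -> S (a *: x + y).

Definition closed_set {R : realType} {V : lmodType R} (ip : V -> V -> R)
  (S : V -> Prop) : Prop :=
  forall u l, (forall n, S (u n)) -> converges ip u l -> S l.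

Definition dense {R : realType} {V : lmodType R} (ip : V -> V -> R)
  (S : V -> Prop) : Prop :=
  forall x (eps : R), 0 < eps -> exists y, S y /\ hnorm ip (x - y) < eps.

Definition orth {R : realType} {V : lmodType R} (ip : V -> V -> R)
  (S : V -> Prop) : V -> Prop :=
  fun x => forall y, S y -> ip x y = 0.

Definition is_orth_proj {R : realType} {V : lmodType R} (ip : V -> V -> R)
  (S : V -> Prop) (P : V -> V) : Prop :=
  forall x, S (P x) /\ orth ip S (x - P x).

Definition fin_dim {R : realType} {V : lmodType R} (S : V -> Prop) : Prop :=
  exists (n : nat) (b : 'I_n -> V), forall x, S x ->
    exists c : 'I_n -> R, x = \sum_(i < n) c i *: b i.

Record op (R : realType) (U W : lmodType R) := Op {
  op_dom : U -> Prop;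
  op_app : U -> W }.

Definition linear_op {R : realType} {U W : lmodType R} (A : op U W) : Prop :=
  subspace (op_dom A) /\
  forall a x y, op_dom A x -> op_dom A y ->
    op_app A (a *: x + y) = a *: op_app A x + op_app A y.

Definition closed_op {R : realType} {U W : lmodType R}
  (ipU : U -> U -> R) (ipW : W -> W -> R) (A : op U W) : Prop :=
  forall u x y, (forall n, op_dom A (u n)) -> converges ipU u x ->
    converges ipW (fun n => op_app A (u n)) y -> op_dom A x /\ op_app A x = y.

Definition dd_closed {R : realType} {U W : lmodType R}
  (ipU : U -> U -> R) (ipW : W -> W -> R) (A : op U W) : Prop :=
  linear_op A /\ dense ipU (op_dom A) /\ closed_op ipU ipW A.

Definition is_adjoint {R : realType} {U W : lmodType R}
  (ipU : U -> U -> R) (ipW : W -> W -> R) (A : op U W) (As : op W U) : Prop :=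
  (forall y, op_dom As y <->
     exists z, forall x, op_dom A x -> ipW (op_app A x) y = ipU x z) /\
  (forall x y, op_dom A x -> op_dom As y -> ipW (op_app A x) y = ipU x (op_app As y)).

Definition op_range {R : realType} {U W : lmodType R} (A : op U W) : W -> Prop :=
  fun y => exists x, op_dom A x /\ op_app A x = y.

Definition op_ker {R : realType} {U W : lmodType R} (A : op U W) : U -> Prop :=
  fun x => op_dom A x /\ op_app A x = 0.

(* reduced operator: restriction of A to D(A) ∩ R(B) (B = A^* ) *)
Definition red {R : realType} {U W : lmodType R} (A : op U W) (B : op W U) : op U W :=
  Op (fun x => op_dom A x /\ op_range B x) (op_app A).

Definition comp_op {R : realType} {U W X : lmodType R} (B : op W X) (A : op U W) : op U X :=
  Op (fun x => op_dom A x /\ op_dom B (op_app A x)) (fun x => op_app B (op_app A x)).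

(* K_l = N(A_l) ∩ N(A_{l-1}^* ) *)
Definition harm {R : realType} {U W V' : lmodType R} (A : op U W) (Bs : op U V') : U -> Prop :=
  fun z => op_ker A z /\ op_ker Bs z.

Definition best_const {R : realType} {U W : lmodType R}
  (ipU : U -> U -> R) (ipW : W -> W -> R) (A : op U W) (As : op W U) (c : R) : Prop :=
  0 < c /\
  (forall x, op_dom (red A As) x -> hnorm ipU x <= c * hnorm ipW (op_app A x)) /\
  (forall c', (forall x, op_dom (red A As) x -> hnorm ipU x <= c' * hnorm ipW (op_app A x)) ->
     c <= c').

Definition attains_min {R : realType} {T : Type} (D : T -> Prop) (F : T -> R) (m : R) (z : T) : Prop :=
  D z /\ F z = m /\ forall w, D w -> m <= F w.

Definition attains_max {R : realType} {T : Type} (D : T -> Prop) (F : T -> R) (m : R) (z : T) : Prop :=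
  D z /\ F z = m /\ forall w, D w -> F w <= m.

From HB Require Import structures.
From mathcomp Require Import all_boot all_order all_algebra.
From mathcomp Require Import boolp classical_sets reals.
From mathcomp Require Import ring lra.
Set Implicit Arguments. Unset Strict Implicit. Unset Printing Implicit Defensive.
Import Order.TTheory GRing.Theory Num.Theory.
Local Open Scope ring_scope.

(* The errors e = x - xt and h = y - yt are split along the orthogonal Hodge
   decompositions H2 = R(A1) + K2 + R(A2^* ) and H3 = R(A2) + K3 + R(A3^* ), which
   hold because all ranges involved are closed and R(A1) is contained in N(A2).
   Each component is identified by projecting the equations satisfied by x; its
   lower bounds come from the contractivity of orthogonal projections together
   with the Friedrichs inequalities |u| <= c |A u| on D(A) /\ R(A^* ) and
   |w| <= c |A^* w| on D(A^* ) /\ R(A), and its dual maxima from the identity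
   2 <a, w> - |w|^2 = |a|^2 - |a - w|^2.  The functional-analytic input (closedness
   of the adjoint, N(A) = R(A^* )^perp, and closedness of R(A^* ) when R(A) is
   closed, via uniform boundedness) is derived from the definitions. *)

(** * Inner product spaces and orthogonal projections *)

Section InnerProduct.
Variables (R : realType) (V : lmodType R) (ip : V -> V -> R).
Hypothesis Hip : is_inner ip.
Local Notation nr := (hnorm ip).

Lemma ipC x y : ip x y = ip y x.
Proof. by case: Hip. Qed.

Lemma ipZDl a x y z : ip (a *: x + y) z = a * ip x z + ip y z.
Proof. by case: Hip => _ []. Qed.

Lemma ipDl x y z : ip (x + y) z = ip x z + ip y z.
Proof. by rewrite -[x]scale1r ipZDl mul1r scale1r. Qed.

Lemma ip0l z : ip 0 z = 0.
Proof. by apply: (addrI (ip 0 z)); rewrite -ipDl !addr0. Qed.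

Lemma ipZl a x z : ip (a *: x) z = a * ip x z.
Proof. by rewrite -[a *: x]addr0 ipZDl ip0l addr0. Qed.

Lemma ipNl x z : ip (- x) z = - ip x z.
Proof. by rewrite -scaleN1r ipZl mulN1r. Qed.

Lemma ipDr x y z : ip z (x + y) = ip z x + ip z y.
Proof. by rewrite ipC ipDl ipC (ipC y). Qed.

Lemma ipZr a x z : ip z (a *: x) = a * ip z x.
Proof. by rewrite ipC ipZl ipC. Qed.

Lemma ipNr x z : ip z (- x) = - ip z x.
Proof. by rewrite ipC ipNl ipC. Qed.

Lemma ip0r z : ip z 0 = 0.
Proof. by rewrite ipC ip0l. Qed.

Lemma ip_ge0 x : 0 <= ip x x.
Proof. by case: Hip => _ [_ []]. Qed.

Lemma ip_eq0 x : ip x x = 0 -> x = 0.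
Proof. by case: Hip => _ [_ [_]]; apply. Qed.

Lemma hnorm_ge0 x : 0 <= nr x.
Proof. exact: sqrtr_ge0. Qed.

Lemma hnorm_sqr x : nr x ^+ 2 = ip x x.
Proof. by rewrite sqr_sqrtr // ip_ge0. Qed.

Lemma hnorm0 : nr 0 = 0.
Proof. by rewrite /hnorm ip0l sqrtr0. Qed.

Lemma hnorm_eq0 x : nr x = 0 -> x = 0.
Proof. by move=> h; apply: ip_eq0; rewrite -hnorm_sqr h expr0n. Qed.

Lemma hnormN x : nr (- x) = nr x.
Proof. by rewrite /hnorm ipNl ipNr opprK. Qed.

Lemma hnorm_distC x y : nr (x - y) = nr (y - x).
Proof. by rewrite -hnormN opprB. Qed.

Lemma hnormZ a x : nr (a *: x) = `|a| * nr x.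
Proof. by rewrite /hnorm ipZl ipZr mulrA sqrtrM ?sqrtr_sqr // -expr2 sqr_ge0. Qed.

Lemma hnormZ_sqr a x : nr (a *: x) ^+ 2 = a ^+ 2 * nr x ^+ 2.
Proof. by rewrite !hnorm_sqr ipZl ipZr mulrA expr2. Qed.

Lemma hnorm_sqrD x y : nr (x + y) ^+ 2 = nr x ^+ 2 + 2 * ip x y + nr y ^+ 2.
Proof. by rewrite !hnorm_sqr !(ipDl, ipDr) (ipC y x); ring. Qed.

Lemma hnorm_sqrB x y : nr (x - y) ^+ 2 = nr x ^+ 2 - 2 * ip x y + nr y ^+ 2.
Proof. by rewrite hnorm_sqrD hnormN ipNr; ring. Qed.

Lemma hnorm_sqrD_orth x y : ip x y = 0 -> nr (x + y) ^+ 2 = nr x ^+ 2 + nr y ^+ 2.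
Proof. by move=> h; rewrite hnorm_sqrD h mulr0 addr0. Qed.

Lemma hnorm_parallelogram x y :
  nr (x - y) ^+ 2 + nr (x + y) ^+ 2 = 2 * nr x ^+ 2 + 2 * nr y ^+ 2.
Proof. by rewrite hnorm_sqrB hnorm_sqrD; ring. Qed.

Lemma ip_sqr_le x y : ip x y ^+ 2 <= ip x x * ip y y.
Proof.
have [y0|y0] := eqVneq (ip y y) 0; first by rewrite (ip_eq0 y0) ip0r expr0n ip0r mulr0.
have yy_gt0 : 0 < ip y y by rewrite lt_def y0 ip_ge0.
set t := ip x y / ip y y.
have tyy : t * ip y y = ip x y by rewrite mulfVK.
have := ip_ge0 (x - t *: y).
rewrite !(ipDl, ipDr, ipNl, ipNr, ipZl, ipZr) (ipC y x) => h.
have := mulr_ge0 (ltW yy_gt0) (ltW yy_gt0); nra.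
Qed.

Lemma cauchy_schwarz x y : ip x y <= nr x * nr y.
Proof.
have h := ip_sqr_le x y; rewrite -!hnorm_sqr -exprMn in h.
have := mulr_ge0 (hnorm_ge0 x) (hnorm_ge0 y); nra.
Qed.

Lemma cauchy_schwarz_norm x y : `|ip x y| <= nr x * nr y.
Proof.
rewrite ler_norml cauchy_schwarz andbT lerNl -ipNr.
by rewrite -(hnormN y) cauchy_schwarz.
Qed.

Lemma ler_hnormD x y : nr (x + y) <= nr x + nr y.
Proof.
have := hnorm_sqrD x y; have := cauchy_schwarz x y.
have := hnorm_ge0 x; have := hnorm_ge0 y; have := hnorm_ge0 (x + y); nra.
Qed.

Lemma ler_hdistD x y z : nr (x - z) <= nr (x - y) + nr (y - z).
Proof. by have := ler_hnormD (x - y) (y - z); rewrite addrA subrK. Qed.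

Lemma conv_cauchy_seq u l : converges ip u l -> cauchy_seq ip u.
Proof.
move=> hu eps eps_gt0; have [N hN] := hu (eps / 2) (divr_gt0 eps_gt0 (ltr0Sn _ 1)).
exists N => m n hm hn; have := ler_hdistD (u m) l (u n).
rewrite (hnorm_distC l); have := hN m hm; have := hN n hn.
set a := nr (u m - l); set b := nr (u n - l); lra.
Qed.

Lemma dense_orth_eq0 (D : V -> Prop) w :
  dense ip D -> (forall d, D d -> ip w d = 0) -> w = 0.
Proof.
move=> hD hw; apply: hnorm_eq0; apply/eqP; rewrite eq_le hnorm_ge0 andbT.
apply/ler_addgt0Pr => eps eps_gt0; rewrite add0r.
have [d [Dd hd]] := hD w eps eps_gt0.
have : nr w ^+ 2 <= nr w * eps.
  have -> : nr w ^+ 2 = ip w (w - d) by rewrite hnorm_sqr ipDr ipNr (hw d Dd) subr0.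
  by rewrite (le_trans (cauchy_schwarz _ _)) // ler_wpM2l ?hnorm_ge0 ?ltW.
have := hnorm_ge0 w; nra.
Qed.

End InnerProduct.

Section Subspace.
Variables (R : realType) (V : lmodType R) (S : V -> Prop).
Hypothesis HS : subspace S.

Lemma subspace0 : S 0. Proof. by case: HS. Qed.

Lemma subspaceZD a x y : S x -> S y -> S (a *: x + y).
Proof. by case: HS => _; apply. Qed.

Lemma subspaceD x y : S x -> S y -> S (x + y).
Proof. by move=> Sx Sy; have := subspaceZD 1 Sx Sy; rewrite scale1r. Qed.

Lemma subspaceZ a x : S x -> S (a *: x).
Proof. by move=> Sx; rewrite -[_ *: _]addr0; apply: subspaceZD => //; apply: subspace0. Qed.

Lemma subspaceN x : S x -> S (- x).
Proof. by rewrite -scaleN1r; apply: subspaceZ. Qed.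

Lemma subspaceB x y : S x -> S y -> S (x - y).
Proof. by move=> Sx Sy; apply: subspaceD => //; apply: subspaceN. Qed.

End Subspace.

Lemma subspaceI (R : realType) (V : lmodType R) (S T : V -> Prop) :
  subspace S -> subspace T -> subspace (fun v => S v /\ T v).
Proof.
move=> HS HT; split; first by split; apply: subspace0.
by move=> a x y [Sx Tx] [Sy Ty]; split; apply: subspaceZD.
Qed.

Section Projection.
Variables (R : realType) (V : lmodType R) (ip : V -> V -> R) (S : V -> Prop).
Hypotheses (Hip : is_inner ip) (HS : subspace S).
Local Notation nr := (hnorm ip).

Lemma orthZD a x y : orth ip S x -> orth ip S y -> orth ip S (a *: x + y).
Proof. by move=> hx hy s Ss; rewrite (ipZDl Hip) hx // hy // mulr0 addr0. Qed.

Lemma orthB x y : orth ip S x -> orth ip S y -> orth ip S (x - y).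
Proof. by move=> hx hy; rewrite -scaleN1r addrC; apply: orthZD. Qed.

Lemma orth_subspace_eq0 x : S x -> orth ip S x -> x = 0.
Proof. by move=> Sx /(_ x Sx); apply: ip_eq0. Qed.

Variable P : V -> V.
Hypothesis HP : is_orth_proj ip S P.

Lemma proj_in v : S (P v). Proof. by case: (HP v). Qed.

Lemma proj_sub_orth v : orth ip S (v - P v). Proof. by case: (HP v). Qed.

Lemma proj_eq v a : S a -> orth ip S (v - a) -> P v = a.
Proof.
move=> Sa hva; apply/eqP; rewrite -subr_eq0; apply/eqP.
apply: orth_subspace_eq0; first exact: (subspaceB HS (proj_in v) Sa).
have -> : P v - a = (v - a) - (v - P v) by rewrite opprB [RHS]addrC addrA subrK.
by apply: orthB => //; apply: proj_sub_orth.
Qed.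

Lemma proj_id v : S v -> P v = v.
Proof. by move=> Sv; apply: proj_eq => // s _; rewrite subrr (ip0l Hip). Qed.

Lemma proj_eq0 v : orth ip S v -> P v = 0.
Proof. by move=> hv; apply: proj_eq; rewrite ?subr0 //; apply: subspace0. Qed.

Lemma projZD a u v : P (a *: u + v) = a *: P u + P v.
Proof.
apply: proj_eq; first exact: (subspaceZD HS a (proj_in u) (proj_in v)).
have -> : a *: u + v - (a *: P u + P v) = a *: (u - P u) + (v - P v).
  by rewrite scalerBr opprD addrACA.
by apply: orthZD; apply: proj_sub_orth.
Qed.

Lemma projD u v : P (u + v) = P u + P v.
Proof. by rewrite -[u]scale1r projZD !scale1r. Qed.

Lemma projN u : P (- u) = - P u.
Proof. by rewrite -scaleN1r -[_ *: u]addr0 projZD (proj_id (subspace0 HS)) addr0 scaleN1r. Qed.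

Lemma projB u v : P (u - v) = P u - P v.
Proof. by rewrite projD projN. Qed.

Lemma ip_proj v s : S s -> ip v s = ip (P v) s.
Proof.
move=> Ss; have := proj_sub_orth v Ss; rewrite (ipDl Hip) (ipNl Hip).
by move/eqP; rewrite subr_eq0 => /eqP.
Qed.

Lemma hnorm_proj_le v : nr (P v) <= nr v.
Proof.
have e : nr v ^+ 2 = nr (P v) ^+ 2 + nr (v - P v) ^+ 2.
  rewrite -(hnorm_sqrD_orth Hip); first by rewrite addrC subrK.
  by rewrite (ipC Hip); apply: proj_sub_orth; apply: proj_in.
by rewrite -(@ler_pXn2r _ 2) ?nnegrE ?hnorm_ge0 // e lerDl exprn_ge0 ?hnorm_ge0.
Qed.

End Projection.

(** * Projection theorem and uniform boundedness *)

Lemma eventually_inv_succ_lt (R : realType) (eps : R) :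
  0 < eps -> exists N : nat, forall n, (N <= n)%N -> n.+1%:R^-1 < eps.
Proof.
move=> eps_gt0; exists (Num.Def.archi_bound eps^-1) => n hn.
rewrite invf_plt ?posrE ?ltr0Sn //.
apply: lt_le_trans (archi_boundP _) _; first by rewrite invr_ge0 ltW.
by rewrite ler_nat (leq_trans hn).
Qed.

Section ProjectionTheorem.
Variables (R : realType) (V : lmodType R) (ip : V -> V -> R) (S : V -> Prop).
Hypotheses (Hip : is_inner ip) (HS : subspace S).
Local Notation nr := (hnorm ip).

Lemma orth_of_dist_min x p :
  S p -> (forall s, S s -> nr (x - p) <= nr (x - s)) -> orth ip S (x - p).
Proof.
move=> Sp pmin z Sz; set b := ip (x - p) z; set c := nr z ^+ 2.
have c_ge0 : 0 <= c by rewrite exprn_ge0 ?hnorm_ge0.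
have key t : 0 <= t ^+ 2 * c - 2 * t * b.
  have := pmin _ (subspaceD HS Sp (subspaceZ HS t Sz)).
  rewrite -(@ler_pXn2r _ 2) ?nnegrE ?hnorm_ge0 // opprD addrA (hnorm_sqrB Hip (x - p)).
  by rewrite (ipZr Hip) (hnormZ_sqr Hip) -/b -/c; lra.
(* the variational inequality at t = b / (c + 1) forces b = 0 *)
have [t tc] : exists t, t * (c + 1) = b.
  by exists (b / (c + 1)); rewrite mulfVK // gt_eqF // ltr_pwDr.
have := key t; rewrite -tc => kt.
have : t ^+ 2 * (c + 2) <= 0 by lra.
rewrite pmulr_lle0; last by lra.
move=> t2_le0; have : t ^+ 2 == 0 by rewrite eq_le t2_le0 sqr_ge0.
by rewrite sqrf_eq0 => /eqP ->; rewrite mul0r.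
Qed.

Lemma dist_min_seq_cauchy x d (s : nat -> V) :
  0 <= d -> (forall v, S v -> d <= nr (x - v)) -> (forall n, S (s n)) ->
  (forall n, nr (x - s n) < d + n.+1%:R^-1) -> cauchy_seq ip s.
Proof.
move=> d_ge0 dmin Ss hs eps eps_gt0.
have inv_le1 n : n.+1%:R^-1 <= 1 :> R by rewrite invf_le1 ?ltr0Sn // ler1n.
have inv_ge0 n : 0 <= n.+1%:R^-1 :> R by rewrite invr_ge0 ler0n.
have d4_gt0 : 0 < 4 * d + 2 by lra.
have [N hN] := eventually_inv_succ_lt (divr_gt0 (mulr_gt0 eps_gt0 eps_gt0)
  (mulr_gt0 (ltr0Sn _ 1) d4_gt0)).
exists N => m n hm hn.
(* parallelogram law at x - s n, x - s m, with the midpoint of s n, s m in S *)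
have hpar := hnorm_parallelogram Hip (x - s n) (x - s m).
have ediff : x - s n - (x - s m) = s m - s n by rewrite opprB addrC addrA subrK.
have emid : x - s n + (x - s m) = 2 *: (x - 2^-1 *: (s n + s m)).
  rewrite scalerBr scalerA mulfV ?pnatr_eq0 // scale1r scaler_nat mulr2n.
  by rewrite opprD addrACA.
rewrite ediff emid (hnormZ_sqr Hip) in hpar.
have := dmin _ (subspaceZ HS 2^-1 (subspaceD HS (Ss n) (Ss m))).
rewrite -(@ler_pXn2r _ 2) ?nnegrE ?hnorm_ge0 // => hmid.
rewrite -(@ltr_pXn2r _ 2) ?nnegrE ?hnorm_ge0 ?ltW //.
have := hs n; have := hs m; have := dmin _ (Ss n); have := dmin _ (Ss m).
have := hN n hn; have := hN m hm; have := inv_le1 n; have := inv_le1 m.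
have := inv_ge0 n; have := inv_ge0 m.
move: hpar hmid; set a := nr (x - s n); set b := nr (x - s m); set w := nr (x - _).
set c := nr (s m - s n); set en := n.+1%:R^-1; set em := m.+1%:R^-1.
rewrite !ltr_pdivlMr ?(mulr_gt0 (ltr0Sn _ 1) d4_gt0) //.
move=> hpar hmid em_ge0 en_ge0 em_le1 en_le1 hem hen hdb hda hb ha.
have : c ^+ 2 <= (4 * d + 2) * (en + em) by nra.
nra.
Qed.

Lemma orth_proj_exists x : complete_ip ip -> closed_set ip S ->
  exists p, S p /\ orth ip S (x - p).
Proof.
move=> Hc Hcl.
pose D : set R := fun r => exists s, S s /\ r = nr (x - s).
have D_ne : (D !=set0)%classic by exists (nr (x - 0)), 0; split => //; apply: subspace0.
have D_lb : has_lbound D by exists 0 => r [s [_ ->]]; apply: hnorm_ge0.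
set d := inf D.
have dmin s : S s -> d <= nr (x - s) by move=> Ss; apply: (ge_inf D_lb); exists s.
have d_ge0 : 0 <= d by apply: lb_le_inf => // r [s [_ ->]]; apply: hnorm_ge0.
have seq n : exists s, S s /\ nr (x - s) < d + n.+1%:R^-1.
  have inv_gt0 : 0 < n.+1%:R^-1 :> R by rewrite invr_gt0 ltr0Sn.
  have [_ [s [Ss ->]] hs] := inf_adherent inv_gt0 (conj D_ne D_lb).
  by exists s.
have [s hs] := choice seq.
have [p hp] := Hc s (dist_min_seq_cauchy d_ge0 dmin (fun n => (hs n).1) (fun n => (hs n).2)).
have Sp : S p by apply: (Hcl s p) => // n; apply: (hs n).1.
exists p; split => //; apply: orth_of_dist_min => // v Sv.
apply: le_trans (dmin _ Sv); apply/ler_addgt0Pr => eps eps_gt0.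
have [N1 hN1] := eventually_inv_succ_lt (divr_gt0 eps_gt0 (ltr0Sn _ 1)).
have [N2 hN2] := hp (eps / 2) (divr_gt0 eps_gt0 (ltr0Sn _ 1)).
set k := maxn N1 N2.
have := hN1 k (leq_maxl N1 N2); have := hN2 k (leq_maxr N1 N2); have := (hs k).2.
have := ler_hdistD Hip x (s k) p; clearbody d.
set a := nr (x - s k); set b := nr (s k - p); set e := k.+1%:R^-1; lra.
Qed.

End ProjectionTheorem.

Definition hump_scale (R : realType) (n : nat) : R := (3 ^+ n)^-1.

Lemma hump_scale_gt0 (R : realType) n : 0 < hump_scale R n.
Proof. by rewrite invr_gt0 exprn_gt0. Qed.

Lemma hump_scaleS (R : realType) n : hump_scale R n = 3 * hump_scale R n.+1.
Proof. by rewrite /hump_scale exprS invfM mulrA mulfV ?mul1r // pnatr_eq0. Qed.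

Lemma hump_scale_le (R : realType) n : hump_scale R n <= n.+1%:R^-1.
Proof.
rewrite lef_pV2 ?posrE ?exprn_gt0 ?ltr0Sn //.
by rewrite -natrX ler_nat ltn_expl.
Qed.

Section GlidingHump.
Variables (R : realType) (V : lmodType R) (ip : V -> V -> R).
Hypothesis Hip : is_inner ip.
Local Notation nr := (hnorm ip).
Local Notation r3 := (hump_scale R).

(* gliding hump: step m adds a multiple of zs m of length 3^-(m+1), signed so
   that it does not decrease |<hump zs m, zs m>| *)
Fixpoint hump (zs : nat -> V) (n : nat) : V :=
  if n is m.+1 then
    hump zs m + (((if 0 <= ip (hump zs m) (zs m) then 1 else -1) * r3 m.+1)
                 / nr (zs m)) *: zs m
  else 0.

Variable zs : nat -> V.
Hypothesis zs_gt0 : forall n, 0 < nr (zs n).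

Lemma hump_ip_ge m : r3 m.+1 * nr (zs m) <= `|ip (hump zs m.+1) (zs m)|.
Proof.
rewrite /= (ipDl Hip) (ipZl Hip) -(hnorm_sqr Hip) expr2 mulrA divfK ?gt_eqF //.
have := zs_gt0 m; have := hump_scale_gt0 R m.+1.
set a := ip _ _; set z := nr (zs m); set q := r3 m.+1.
by case: ifP => ha q_gt0 z_gt0; rewrite ?mul1r ?mulN1r ?mulNr;
  [rewrite ger0_norm | rewrite ler0_norm]; nra.
Qed.

Lemma hump_step m : nr (hump zs m.+1 - hump zs m) = r3 m.+1.
Proof.
rewrite /= addrAC subrr add0r (hnormZ Hip) normrM normrM.
rewrite (ger0_norm (ltW (hump_scale_gt0 R m.+1))) normfV (ger0_norm (hnorm_ge0 ip (zs m))).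
rewrite divfK ?gt_eqF //.
by case: ifP => _; rewrite ?normrN normr1 mul1r.
Qed.

Lemma hump_dist n m : (n <= m)%N -> nr (hump zs m - hump zs n) <= r3 n / 2.
Proof.
move=> /subnKC <-; set k := (m - n)%N.
suff : nr (hump zs (n + k) - hump zs n) <= (r3 n - r3 (n + k)) / 2.
  by have := hump_scale_gt0 R (n + k); lra.
elim: k => [|k ih]; first by rewrite addn0 subrr (hnorm0 Hip) subrr mul0r.
have := ler_hdistD Hip (hump zs (n + k.+1)) (hump zs (n + k)) (hump zs n).
have := hump_scaleS R (n + k); rewrite addnS hump_step; lra.
Qed.

Lemma hump_cauchy : cauchy_seq ip (hump zs).
Proof.
move=> eps eps_gt0; have [N hN] := eventually_inv_succ_lt eps_gt0.
exists N => m n hm hn.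
have := ler_hdistD Hip (hump zs m) (hump zs N) (hump zs n).
rewrite (hnorm_distC Hip (hump zs N)).
have := hump_dist hm; have := hump_dist hn; have := hN N (leqnn N).
have := hump_scale_le R N; set e := N.+1%:R^-1; lra.
Qed.

Lemma hump_lim_dist l n : converges ip (hump zs) l -> nr (l - hump zs n) <= r3 n / 2.
Proof.
move=> hl; apply/ler_addgt0Pr => eps eps_gt0.
have [N hN] := hl eps eps_gt0; set k := maxn n N.
have := ler_hdistD Hip l (hump zs k) (hump zs n).
rewrite (hnorm_distC Hip l (hump zs k)); have := hN k (leq_maxr n N).
have := hump_dist (leq_maxl n N); lra.
Qed.

End GlidingHump.

Lemma weakly_bounded_bounded (R : realType) (V : lmodType R) (ip : V -> V -> R)
    (B : V -> Prop) :
  is_inner ip -> complete_ip ip ->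
  (forall w, exists M : R, forall z, B z -> `|ip w z| <= M) ->
  exists C, forall z, B z -> hnorm ip z <= C.
Proof.
move=> Hip Hc hw; apply: contrapT => unbounded.
pose r3 := hump_scale R.
have big n : exists z, B z /\ 2 * n.+1%:R / r3 n.+1 < hnorm ip z.
  apply: contrapT => h; apply: unbounded; exists (2 * n.+1%:R / r3 n.+1) => z Bz.
  by rewrite leNgt; apply/negP => hz; apply: h; exists z.
have [zs hzs] := choice big.
have zs_gt0 n : 0 < hnorm ip (zs n).
  apply: lt_trans (hzs n).2.
  by rewrite divr_gt0 ?hump_scale_gt0 // mulr_gt0 ?ltr0Sn.
have [l hl] := Hc _ (hump_cauchy Hip zs_gt0).
have [M hM] := hw l.
have [n hn] : exists n : nat, M < n.+1%:R.
  exists (Num.Def.archi_bound `|M|).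
  apply: le_lt_trans (ler_norm M) (lt_trans (archi_boundP (normr_ge0 M)) _).
  by rewrite ltr_nat.
(* |<l, zs n>| >= |<hump n.+1, zs n>| - |hump n.+1 - l| |zs n|
             >= 3^-(n+1) |zs n| / 2 > n + 1 > M *)
have := hM _ (hzs n).1; have := hump_ip_ge Hip zs_gt0 n.
have := cauchy_schwarz_norm Hip (hump ip zs n.+1 - l) (zs n).
rewrite (hnorm_distC Hip); have := hump_lim_dist Hip zs_gt0 n.+1 hl.
have := lerB_dist (ip (hump ip zs n.+1) (zs n)) (ip (hump ip zs n.+1 - l) (zs n)).
rewrite (ipDl Hip) (ipNl Hip) opprD opprK addrA subrr add0r.
have := (hzs n).2; have := hump_scale_gt0 R n.+1; have := zs_gt0 n.
have e2 : r3 n.+1 * (2 * n.+1%:R / r3 n.+1) = 2 * n.+1%:R.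
  by rewrite mulrC divfK // gt_eqF // hump_scale_gt0.
move: e2; rewrite -/r3.
set a3 := `|_ - ip l (zs n)|; set a1 := `|ip l _|; set a2 := `|ip (hump ip zs n.+1) _|.
set z := hnorm ip (zs n); set d := hnorm ip (l - _); set q := r3 n.+1.
set K := 2 * n.+1%:R / q.
move=> e2 z_gt0 q_gt0 hK b5 b4 b3 b2 b1.
have : q * K < q * z by rewrite ltr_pM2l.
nra.
Qed.

(** * Closed operators and their adjoints *)

Section ProductSpace.
Variables (R : realType) (U W : lmodType R) (ipU : U -> U -> R) (ipW : W -> W -> R).

Definition ip_prod (p q : U * W) : R := ipU p.1 q.1 + ipW p.2 q.2.

Hypotheses (HU : is_hilbert ipU) (HW : is_hilbert ipW).
Let HiU : is_inner ipU := HU.1.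
Let HiW : is_inner ipW := HW.1.

Lemma ip_prod_inner : is_inner ip_prod.
Proof.
split; first by move=> p q; rewrite /ip_prod (ipC HiU) (ipC HiW).
split; first by move=> a p q r; rewrite /ip_prod /= (ipZDl HiU) (ipZDl HiW); ring.
split; first by move=> p; rewrite /ip_prod addr_ge0 // ip_ge0.
move=> [u w]; rewrite /ip_prod /= => h.
have := ip_ge0 HiU u; have := ip_ge0 HiW w => hw hu.
have uu0 : ipU u u = 0 by lra.
have ww0 : ipW w w = 0 by lra.
by rewrite (ip_eq0 HiU uu0) (ip_eq0 HiW ww0).
Qed.

Lemma hnorm_prod_fst p : hnorm ipU p.1 <= hnorm ip_prod p.
Proof. by rewrite /hnorm ler_sqrt ?(ip_ge0 ip_prod_inner) // lerDl (ip_ge0 HiW). Qed.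

Lemma hnorm_prod_snd p : hnorm ipW p.2 <= hnorm ip_prod p.
Proof. by rewrite /hnorm ler_sqrt ?(ip_ge0 ip_prod_inner) // lerDr (ip_ge0 HiU). Qed.

Lemma hnorm_prod_le p : hnorm ip_prod p <= hnorm ipU p.1 + hnorm ipW p.2.
Proof.
rewrite -(@ler_pXn2r _ 2) ?nnegrE ?addr_ge0 ?hnorm_ge0 //.
rewrite (hnorm_sqr ip_prod_inner) sqrrD !(hnorm_sqr HiU, hnorm_sqr HiW).
by rewrite lerD2r lerDl mulrn_wge0 // mulr_ge0 ?hnorm_ge0.
Qed.

Lemma ip_prod_complete : complete_ip ip_prod.
Proof.
move=> u hu.
have [l1 hl1] : exists l1, converges ipU (fun n => (u n).1) l1.
  apply: HU.2 => eps /hu [N hN]; exists N => m n hm hn.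
  exact: le_lt_trans (hnorm_prod_fst (u m - u n)) (hN m n hm hn).
have [l2 hl2] : exists l2, converges ipW (fun n => (u n).2) l2.
  apply: HW.2 => eps /hu [N hN]; exists N => m n hm hn.
  exact: le_lt_trans (hnorm_prod_snd (u m - u n)) (hN m n hm hn).
exists (l1, l2) => eps eps_gt0.
have [N1 hN1] := hl1 _ (divr_gt0 eps_gt0 (ltr0Sn _ 1)).
have [N2 hN2] := hl2 _ (divr_gt0 eps_gt0 (ltr0Sn _ 1)).
exists (maxn N1 N2) => n; rewrite geq_max => /andP [hn1 hn2].
have := hN1 n hn1; have := hN2 n hn2; have := hnorm_prod_le (u n - (l1, l2)).
set a := hnorm ip_prod _; set b := hnorm ipU _; set c := hnorm ipW _; lra.
Qed.

End ProductSpace.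

Section LinearOp.
Variables (R : realType) (U W : lmodType R) (A : op U W).
Hypothesis HA : linear_op A.

Lemma op_dom_subspace : subspace (op_dom A). Proof. by case: HA. Qed.

Lemma op_appZD a x y : op_dom A x -> op_dom A y ->
  op_app A (a *: x + y) = a *: op_app A x + op_app A y.
Proof. by case: HA => _; apply. Qed.

Lemma op_appD x y : op_dom A x -> op_dom A y ->
  op_app A (x + y) = op_app A x + op_app A y.
Proof. by move=> Dx Dy; rewrite -[x]scale1r op_appZD // !scale1r. Qed.

Lemma op_app0 : op_app A 0 = 0.
Proof.
have D0 := subspace0 op_dom_subspace.
by apply: (addrI (op_app A 0)); rewrite -op_appD // !addr0.
Qed.

Lemma op_appZ a x : op_dom A x -> op_app A (a *: x) = a *: op_app A x.
Proof.
move=> Dx; have := op_appZD a Dx (subspace0 op_dom_subspace).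
by rewrite op_app0 !addr0.
Qed.

Lemma op_appN y : op_dom A y -> op_app A (- y) = - op_app A y.
Proof.
move=> Dy; have := op_appZD (-1) Dy (subspace0 op_dom_subspace).
by rewrite op_app0 !addr0 !scaleN1r.
Qed.

Lemma op_appB x y : op_dom A x -> op_dom A y ->
  op_app A (x - y) = op_app A x - op_app A y.
Proof.
by move=> Dx Dy; rewrite op_appD ?op_appN //; apply: subspaceN op_dom_subspace _ _.
Qed.

Lemma op_range_subspace : subspace (op_range A).
Proof.
split; first by exists 0; split; [apply: subspace0 op_dom_subspace | exact: op_app0].
move=> a _ _ [x [Dx <-]] [y [Dy <-]].
by exists (a *: x + y); split; [apply: subspaceZD op_dom_subspace _ _ _ Dx Dy | apply: op_appZD].
Qed.

Lemma op_ker_subspace : subspace (op_ker A).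
Proof.
split; first by split; [apply: subspace0 op_dom_subspace | exact: op_app0].
move=> a x y [Dx Ax0] [Dy Ay0]; split; first exact: (subspaceZD op_dom_subspace a Dx Dy).
by rewrite op_appZD // Ax0 Ay0 scaler0 addr0.
Qed.

End LinearOp.

Lemma proj_preimage (R : realType) (X Y : lmodType R) (ipX : X -> X -> R)
    (B : op X Y) (S : X -> Prop) :
  is_inner ipX -> complete_ip ipX -> linear_op B -> subspace S -> closed_set ipX S ->
  (forall v, orth ipX S v -> op_ker B v) ->
  forall v, op_dom B v -> exists p, (op_dom B p /\ S p) /\ op_app B p = op_app B v.
Proof.
move=> Hip Hc HB HS HSc hker v Dv.
have [p [Sp /hker [Dvp Bvp0]]] := orth_proj_exists Hip HS v Hc HSc.
have Dp : op_dom B p.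
  by have := subspaceB (op_dom_subspace HB) Dv Dvp; rewrite opprB addrC subrK.
exists p; split=> //.
by have := op_appB HB Dv Dp; rewrite Bvp0 => /eqP; rewrite eq_sym subr_eq0 => /eqP.
Qed.

Definition op_graph (R : realType) (U W : lmodType R) (A : op U W) : U * W -> Prop :=
  fun p => op_dom A p.1 /\ op_app A p.1 = p.2.

Section Adjoint.
Variables (R : realType) (U W : lmodType R) (ipU : U -> U -> R) (ipW : W -> W -> R).
Variables (A : op U W) (As : op W U).
Hypotheses (HU : is_hilbert ipU) (HW : is_hilbert ipW).
Hypotheses (HA : dd_closed ipU ipW A) (HAs : is_adjoint ipU ipW A As).
Let HiU : is_inner ipU := HU.1.
Let HiW : is_inner ipW := HW.1.
Let HlA : linear_op A := HA.1.

Lemma adjointP u w :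
  op_dom A u -> op_dom As w -> ipW (op_app A u) w = ipU u (op_app As w).
Proof. by case: HAs => _; apply. Qed.

Lemma adjoint_domP w :
  op_dom As w <-> exists z, forall u, op_dom A u -> ipW (op_app A u) w = ipU u z.
Proof. by case: HAs. Qed.

Lemma adjoint_app_eq w z : op_dom As w ->
  (forall u, op_dom A u -> ipW (op_app A u) w = ipU u z) -> op_app As w = z.
Proof.
move=> Dw hz; apply/eqP; rewrite -subr_eq0; apply/eqP.
apply: (dense_orth_eq0 HiU HA.2.1) => u Du.
by rewrite (ipC HiU) (ipDr HiU) (ipNr HiU) -adjointP // hz // subrr.
Qed.

Lemma adjoint_linear : linear_op As.
Proof.
have Dsub : subspace (op_dom As).
  split; first by apply/adjoint_domP; exists 0 => u _; rewrite (ip0r HiW) (ip0r HiU).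
  move=> a w1 w2 /adjoint_domP [z1 h1] /adjoint_domP [z2 h2].
  apply/adjoint_domP; exists (a *: z1 + z2) => u Du.
  by rewrite (ipDr HiW) (ipZr HiW) h1 // h2 // (ipDr HiU) (ipZr HiU).
split=> // a w1 w2 D1 D2; apply: adjoint_app_eq; first exact: (subspaceZD Dsub a D1 D2).
by move=> u Du; rewrite (ipDr HiW) (ipZr HiW) !adjointP // (ipDr HiU) (ipZr HiU).
Qed.

Lemma ker_adjoint_orth_range w : op_ker As w -> orth ipW (op_range A) w.
Proof.
by move=> [Dw Aw0] _ [u [Du <-]]; rewrite (ipC HiW) adjointP // Aw0 (ip0r HiU).
Qed.

Lemma orth_range_ker_adjoint w : orth ipW (op_range A) w -> op_ker As w.
Proof.
move=> hw; have hA u : op_dom A u -> ipW (op_app A u) w = ipU u 0.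
  by move=> Du; rewrite (ip0r HiU) (ipC HiW); apply: hw; exists u.
have Dw : op_dom As w by apply/adjoint_domP; exists 0.
by split=> //; apply: adjoint_app_eq.
Qed.

Lemma op_graph_subspace : subspace (op_graph A).
Proof.
split; first by split; [apply: subspace0 (op_dom_subspace HlA) | apply: op_app0].
move=> a [u1 w1] [u2 w2] [/= D1 <-] [/= D2 <-]; split => /=.
  exact: (subspaceZD (op_dom_subspace HlA) a D1 D2).
exact: op_appZD.
Qed.

Lemma op_graph_closed : closed_set (ip_prod ipU ipW) (op_graph A).
Proof.
move=> p l hp hl.
have [] := HA.2.2 (fun n => (p n).1) l.1 l.2 (fun n => (hp n).1).
- move=> eps /hl [N hN]; exists N => n /hN.
  exact: le_lt_trans (hnorm_prod_fst HU HW (p n - l)).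
- move=> eps /hl [N hN]; exists N => n /hN.
  by rewrite (hp n).2; apply: le_lt_trans (hnorm_prod_snd HU HW (p n - l)).
by split.
Qed.

Lemma orth_range_adjoint_ker u : orth ipU (op_range As) u -> op_ker A u.
Proof.
move=> hu.
have [[v w] [[/= Dv Avw] hvw]] := orth_proj_exists (ip_prod_inner HU HW)
  op_graph_subspace (u, 0) (ip_prod_complete HU HW) op_graph_closed.
(* orthogonality of (u - v, - w) to the graph says As w = u - v *)
have hw : forall x, op_dom A x -> ipW (op_app A x) w = ipU x (u - v).
  move=> x Dx; have := hvw (x, op_app A x) (conj Dx erefl).
  rewrite /ip_prod /= (ipC HiU) (ipDl HiW) (ipNl HiW) (ip0l HiW) add0r (ipC HiW).
  by move/eqP; rewrite subr_eq0 => /eqP.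
have Dw : op_dom As w by apply/adjoint_domP; exists (u - v).
have Asw : op_app As w = u - v by apply: adjoint_app_eq.
have h1 : ipU u (u - v) = 0 by apply: hu; exists w.
have h2 : ipU v (u - v) = ipW w w by rewrite -Asw -adjointP // Avw.
have := ip_ge0 HiU (u - v); have := ip_ge0 HiW w.
rewrite (ipDl HiU) (ipNl HiU) h1 h2 add0r => ww_ge0 uv_ge0.
have ww0 : ipW w w = 0 by lra.
have uv0 : ipU (u - v) (u - v) = 0.
  by rewrite (ipDl HiU) (ipNl HiU) h1 h2 ww0 subrr.
have -> : u = v by apply/eqP; rewrite -subr_eq0; apply/eqP; apply: (ip_eq0 HiU uv0).
by split=> //; rewrite Avw (ip_eq0 HiW ww0).
Qed.

Lemma adjoint_closed : closed_op ipW ipU As.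
Proof.
move=> w y z Dw hy hz.
suff hyz x : op_dom A x -> ipW (op_app A x) y = ipU x z.
  have Dy : op_dom As y by apply/adjoint_domP; exists z.
  by split=> //; apply: adjoint_app_eq.
move=> Dx; apply/eqP; rewrite -subr_eq0 -normr_le0; apply/ler_addgt0Pr => eps eps_gt0.
set a := hnorm ipW (op_app A x) + 1; set b := hnorm ipU x + 1.
have a_gt0 : 0 < a by rewrite ltr_pwDr ?hnorm_ge0.
have b_gt0 : 0 < b by rewrite ltr_pwDr ?hnorm_ge0.
have [N1 hN1] := hy _ (divr_gt0 (divr_gt0 eps_gt0 (ltr0Sn _ 1)) a_gt0).
have [N2 hN2] := hz _ (divr_gt0 (divr_gt0 eps_gt0 (ltr0Sn _ 1)) b_gt0).
set n := maxn N1 N2.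
have -> : ipW (op_app A x) y - ipU x z =
    ipW (op_app A x) (y - w n) + ipU x (op_app As (w n) - z).
  by rewrite (ipDr HiW) (ipNr HiW) (adjointP Dx (Dw n)) (ipDr HiU) (ipNr HiU) addrA subrK.
apply: le_trans (ler_normD _ _) _.
have := cauchy_schwarz_norm HiW (op_app A x) (y - w n).
have := cauchy_schwarz_norm HiU x (op_app As (w n) - z).
have := hN1 n (leq_maxl _ _); have := hN2 n (leq_maxr _ _).
rewrite (hnorm_distC HiW y) !ltr_pdivlMr //.
have := hnorm_ge0 ipW (op_app A x); have := hnorm_ge0 ipU x.
have := hnorm_ge0 ipW (w n - y); have := hnorm_ge0 ipU (op_app As (w n) - z).
rewrite /a /b; set p1 := hnorm ipW (op_app A x); set p2 := hnorm ipU x.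
set p3 := hnorm ipW (w n - y); set p4 := hnorm ipU (op_app As (w n) - z).
set q1 := `|ipW _ _|; set q2 := `|ipU _ _|; nra.
Qed.

Lemma adjoint_red_preimage : closed_set ipW (op_range A) ->
  forall u, op_range As u -> exists w, op_dom (red As A) w /\ op_app As w = u.
Proof.
move=> HR _ [w0 [Dw0 <-]].
exact: (proj_preimage HiW HW.2 adjoint_linear (op_range_subspace HlA) HR
  orth_range_ker_adjoint Dw0).
Qed.

Lemma adjoint_range_bound : closed_set ipW (op_range A) ->
  exists C, 0 < C /\ forall w, op_dom As w -> op_range A w ->
    hnorm ipW w <= C * hnorm ipU (op_app As w).
Proof.
move=> HR.
pose B w := op_dom As w /\ op_range A w /\ hnorm ipU (op_app As w) <= 1.
(* writing w0 = A u + q with q orthogonal to R(A), <w0, w> = <u, As w> on B *)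
have weak w0 : exists M : R, forall w, B w -> `|ipW w0 w| <= M.
  have [q [[u [Du <-]] hq]] :=
    orth_proj_exists HiW (op_range_subspace HlA) w0 HW.2 HR.
  exists (hnorm ipU u) => w [Dw [Rw Aw_le1]].
  have -> : ipW w0 w = ipU u (op_app As w).
    have := hq w Rw; rewrite (ipDl HiW) (ipNl HiW) adjointP //.
    by move/eqP; rewrite subr_eq0 => /eqP.
  apply: le_trans (cauchy_schwarz_norm HiU _ _) _.
  by rewrite ler_piMr ?hnorm_ge0.
have [C hC] := weakly_bounded_bounded HiW HW.2 weak.
have C1_gt0 : 0 < `|C| + 1 by rewrite ltr_pwDr.
exists (`|C| + 1); split=> // w Dw Rw.
have [Aw0|Aw_neq0] := eqVneq (hnorm ipU (op_app As w)) 0.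
  have Kw : op_ker As w by split=> //; apply: (hnorm_eq0 HiU Aw0).
  rewrite (orth_subspace_eq0 HiW Rw (ker_adjoint_orth_range Kw)).
  by rewrite (hnorm0 HiW) mulr_ge0 ?hnorm_ge0 ?ltW.
have Aw_gt0 : 0 < hnorm ipU (op_app As w) by rewrite lt_def Aw_neq0 hnorm_ge0.
set t := (hnorm ipU (op_app As w))^-1.
have t_gt0 : 0 < t by rewrite invr_gt0.
have Bt : B (t *: w).
  split; first exact: (subspaceZ (op_dom_subspace adjoint_linear) t Dw).
  split; first exact: (subspaceZ (op_range_subspace HlA) t Rw).
  by rewrite (op_appZ adjoint_linear t Dw) (hnormZ HiU) gtr0_norm // mulVf.
have := hC _ Bt; rewrite (hnormZ HiW) gtr0_norm // => htw.
rewrite -(ler_pM2l t_gt0) (le_trans htw) // mulrCA mulVf // mulr1.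
by rewrite (le_trans (ler_norm C)) // lerDl.
Qed.

Lemma adjoint_range_closed : closed_set ipW (op_range A) -> closed_set ipU (op_range As).
Proof.
move=> HR u l hu hl.
have [C [C_gt0 hC]] := adjoint_range_bound HR.
have [v hv] := choice (fun n => adjoint_red_preimage HR (hu n)).
have Dv n : op_dom As (v n) by case: (hv n) => [[]].
have hcv : cauchy_seq ipW v.
  move=> eps eps_gt0.
  have [N hN] := conv_cauchy_seq (proj1 HU) hl (divr_gt0 eps_gt0 C_gt0).
  exists N => m n hm hn.
  have Dmn := subspaceB (op_dom_subspace adjoint_linear) (Dv m) (Dv n).
  have Rmn := subspaceB (op_range_subspace HlA) (hv m).1.2 (hv n).1.2.
  apply: le_lt_trans (hC _ Dmn Rmn) _.
  rewrite (op_appB adjoint_linear (Dv m) (Dv n)) (hv m).2 (hv n).2.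
  by rewrite -ltr_pdivlMl // mulrC; apply: hN.
have [v0 hv0] := HW.2 _ hcv.
have hAv : converges ipU (fun n => op_app As (v n)) l.
  by move=> eps /hl [N hN]; exists N => n /hN; rewrite (hv n).2.
by have [Dv0 <-] := adjoint_closed Dv hv0 hAv; exists v0.
Qed.

Lemma red_preimage : closed_set ipW (op_range A) ->
  forall w, op_range A w -> exists u, op_dom (red A As) u /\ op_app A u = w.
Proof.
move=> HR _ [u0 [Du0 <-]].
exact: (proj_preimage HiU HU.2 HlA (op_range_subspace adjoint_linear)
  (adjoint_range_closed HR) orth_range_adjoint_ker Du0).
Qed.

(* with A u = w: |w|^2 = <u, As w> <= |u| |As w| <= c |w| |As w| *)
Lemma best_const_adjoint c : closed_set ipW (op_range A) ->
  best_const ipU ipW A As c ->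
  forall w, op_dom (red As A) w -> hnorm ipW w <= c * hnorm ipU (op_app As w).
Proof.
move=> HR [c_gt0 [hc _]] w [Dw Rw].
have [u [Ru Auw]] := red_preimage HR Rw.
have hu : hnorm ipU u <= c * hnorm ipW w by rewrite -Auw; apply: hc.
have e : hnorm ipW w ^+ 2 = ipU u (op_app As w).
  by rewrite (hnorm_sqr HiW) -{1}Auw adjointP //; case: Ru.
have := cauchy_schwarz HiU u (op_app As w).
have := hnorm_ge0 ipW w; have := hnorm_ge0 ipU u; have := hnorm_ge0 ipU (op_app As w).
move: e hu; set a := hnorm ipW w; set b := hnorm ipU u; set d := hnorm ipU (op_app As w).
move=> e hu d_ge0 b_ge0 a_ge0 hcs.
have h3 : a ^+ 2 <= c * a * d by rewrite e (le_trans hcs) // ler_wpM2r.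
have := mulr_ge0 (ltW c_gt0) d_ge0; nra.
Qed.

End Adjoint.

(** * Error analysis for closed-range pairs *)

Lemma attains_min_sqr (R : realType) (T : Type) (D : T -> Prop) (F : T -> R) a t0 :
  0 <= a -> D t0 -> F t0 = a -> (forall t, D t -> a <= F t) ->
  attains_min D (fun t => F t ^+ 2) (a ^+ 2) t0.
Proof.
move=> a_ge0 Dt0 Ft0 hF; split=> //; split=> [|t Dt]; first by rewrite Ft0.
by have := hF t Dt; nra.
Qed.

Lemma attains_max_gap (R : realType) (V : lmodType R) (ip : V -> V -> R) (T : Type)
    (D : T -> Prop) (G : T -> R) (v : T -> V) a t0 :
  is_inner ip -> D t0 -> v t0 = a ->
  (forall t, D t -> G t = 2 * ip a (v t) - ip (v t) (v t)) ->
  attains_max D G (hnorm ip a ^+ 2) t0.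
Proof.
move=> Hip Dt0 vt0 hG.
have gap t : D t -> G t = hnorm ip a ^+ 2 - hnorm ip (a - v t) ^+ 2.
  by move=> Dt; rewrite hG // (hnorm_sqrB Hip) (hnorm_sqr Hip (v t)); ring.
split=> //; split=> [|t Dt]; first by rewrite gap // vt0 subrr (hnorm0 Hip) expr0n subr0.
by rewrite gap // lerBlDr lerDl exprn_ge0 ?hnorm_ge0.
Qed.

Lemma attains_min_eq (R : realType) (T : Type) (D : T -> Prop) (F G : T -> R) m t0 :
  (forall t, D t -> F t = G t) -> attains_min D F m t0 -> attains_min D G m t0.
Proof.
move=> FG [Dt0 [Ft0 hF]]; split=> //; split=> [|t Dt]; first by rewrite -FG.
by rewrite -FG ?hF.
Qed.

Lemma attains_max_eq (R : realType) (T : Type) (D : T -> Prop) (F G : T -> R) m t0 :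
  (forall t, D t -> F t = G t) -> attains_max D F m t0 -> attains_max D G m t0.
Proof.
move=> FG [Dt0 [Ft0 hF]]; split=> //; split=> [|t Dt]; first by rewrite -FG.
by rewrite -FG ?hF.
Qed.

Record closed_range_pair (R : realType) (U W : lmodType R)
    (ipU : U -> U -> R) (ipW : W -> W -> R) (A : op U W) (As : op W U) (c : R) : Prop :=
  ClosedRangePair {
    crp_innerU : is_inner ipU;
    crp_innerW : is_inner ipW;
    crp_linear : linear_op A;
    crp_linear_adj : linear_op As;
    crp_adj : forall u w, op_dom A u -> op_dom As w ->
      ipW (op_app A u) w = ipU u (op_app As w);
    crp_ker_adj : forall w, orth ipW (op_range A) w -> op_ker As w;
    crp_ker : forall u, orth ipU (op_range As) u -> op_ker A u;
    crp_preimage : forall w, op_range A w ->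
      exists u, op_dom (red A As) u /\ op_app A u = w;
    crp_preimage_adj : forall u, op_range As u ->
      exists w, op_dom (red As A) w /\ op_app As w = u;
    crp_const_gt0 : 0 < c;
    crp_bound : forall u, op_dom (red A As) u ->
      hnorm ipU u <= c * hnorm ipW (op_app A u);
    crp_bound_adj : forall w, op_dom (red As A) w ->
      hnorm ipW w <= c * hnorm ipU (op_app As w) }.

Lemma closed_range_pairP (R : realType) (U W : lmodType R)
    (ipU : U -> U -> R) (ipW : W -> W -> R) (A : op U W) (As : op W U) (c : R) :
  is_hilbert ipU -> is_hilbert ipW -> dd_closed ipU ipW A -> is_adjoint ipU ipW A As ->
  closed_set ipW (op_range A) -> best_const ipU ipW A As c ->
  closed_range_pair ipU ipW A As c.
Proof.
move=> HU HW HA HAs HR hc; split.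
- exact: HU.1.
- exact: HW.1.
- exact: HA.1.
- exact: (adjoint_linear HU HW HA HAs).
- exact: (adjointP HAs).
- exact: (orth_range_ker_adjoint HU HW HA HAs).
- exact: (orth_range_adjoint_ker HU HW HA HAs).
- exact: (red_preimage HU HW HA HAs HR).
- exact: (adjoint_red_preimage HU HW HA HAs HR).
- exact: hc.1.
- exact: hc.2.1.
- exact: (best_const_adjoint HU HW HA HAs HR hc).
Qed.

Lemma closed_range_pair_sym (R : realType) (U W : lmodType R)
    (ipU : U -> U -> R) (ipW : W -> W -> R) (A : op U W) (As : op W U) (c : R) :
  closed_range_pair ipU ipW A As c -> closed_range_pair ipW ipU As A c.
Proof.
case=> HiU HiW HlA HlAs Hadj *; split=> // w u Dw Du.
by rewrite (ipC HiU) -Hadj // (ipC HiW).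
Qed.

Section ClosedRangePairTheory.
Variables (R : realType) (U W : lmodType R) (ipU : U -> U -> R) (ipW : W -> W -> R).
Variables (A : op U W) (As : op W U) (c : R).
Hypothesis HA : closed_range_pair ipU ipW A As c.
Variable P : W -> W.
Hypothesis HP : is_orth_proj ipW (op_range A) P.
Let HiU := crp_innerU HA.
Let HiW := crp_innerW HA.
Let HlAs := crp_linear_adj HA.
Let HRA := op_range_subspace (crp_linear HA).
Local Notation nrU := (hnorm ipU).
Local Notation nrW := (hnorm ipW).

Lemma range_orth_ker_adj a w : op_range A a -> op_ker As w -> ipW a w = 0.
Proof. by move=> [u [Du <-]] [Dw Aw0]; rewrite (crp_adj HA) // Aw0 (ip0r HiU). Qed.

Lemma proj_ker_adj w : op_ker As w -> P w = 0.
Proof.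
by move=> Kw; apply: (proj_eq0 HiW HRA HP) => a Ra; rewrite (ipC HiW) (range_orth_ker_adj Ra).
Qed.

Lemma ker_adj_sub_proj w : op_ker As (w - P w).
Proof. exact/(crp_ker_adj HA)/(proj_sub_orth HP). Qed.

Lemma adj_proj w : op_dom As w -> op_dom As (P w) /\ op_app As (P w) = op_app As w.
Proof.
move=> Dw; have [Dr Ar0] := ker_adj_sub_proj w.
have Pw : P w = w - (w - P w) by rewrite opprB addrC subrK.
have DPw : op_dom As (P w) by rewrite Pw; apply: (subspaceB (op_dom_subspace HlAs)).
by split=> //; rewrite {1}Pw (op_appB HlAs Dw Dr) Ar0 subr0.
Qed.

Lemma hnorm_proj_range_le w : op_dom As w -> nrW (P w) <= c * nrU (op_app As w).
Proof.
move=> Dw; have [DPw <-] := adj_proj Dw.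
by apply: (crp_bound_adj HA); split=> //; apply: (proj_in HP).
Qed.

Section RangeComponent.
Variables (x0 : W) (g : U) (z a : W).
Hypotheses (Dx0 : op_dom As x0) (Ax0 : op_app As x0 = g) (ha : a = P (x0 - z)).

Lemma range_component_adj : op_dom As (a + z) /\ op_app As (a + z) = g.
Proof.
have [DPx0 APx0] := adj_proj Dx0; have [Dr Ar0] := ker_adj_sub_proj z.
have -> : a + z = P x0 + (z - P z).
  by rewrite ha (projB HiW HRA HP) addrAC -addrA.
split; first exact: (subspaceD (op_dom_subspace HlAs) DPx0 Dr).
by rewrite (op_appD HlAs DPx0 Dr) APx0 Ar0 addr0.
Qed.

Lemma range_component_le zeta :
  op_dom As zeta -> nrW a <= c * nrU (op_app As zeta - g) + nrW (zeta - z).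
Proof.
move=> Dzeta; have Dx0z := subspaceB (op_dom_subspace HlAs) Dx0 Dzeta.
have := hnorm_proj_range_le Dx0z; rewrite (op_appB HlAs Dx0 Dzeta) Ax0 (hnorm_distC HiU).
have := hnorm_proj_le HiW HP (zeta - z).
have -> : a = P (x0 - zeta) + P (zeta - z).
  by rewrite ha -(projD HiW HRA HP) addrA subrK.
have := ler_hnormD HiW (P (x0 - zeta)) (P (zeta - z)); lra.
Qed.

Lemma range_component_min :
  attains_min (op_dom As) (fun zeta => (c * nrU (op_app As zeta - g) + nrW (zeta - z)) ^+ 2)
    (nrW a ^+ 2) (a + z).
Proof.
have [Daz Aaz] := range_component_adj.
apply: attains_min_sqr (hnorm_ge0 _ _) Daz _ range_component_le.
by rewrite Aaz subrr (hnorm0 HiU) mulr0 add0r addrK.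
Qed.

Lemma range_component_max : exists phi, op_dom (red A As) phi /\ op_app A phi = a /\
  attains_max (op_dom A) (fun phi => 2 * ipU g phi - ipW (2 *: z + op_app A phi) (op_app A phi))
    (nrW a ^+ 2) phi.
Proof.
have Ra : op_range A a by rewrite ha; apply: (proj_in HP).
have [phi [Rphi Aphi]] := crp_preimage HA Ra.
exists phi; split=> //; split=> //.
apply: (attains_max_gap HiW (v := op_app A)) => //; first by case: Rphi.
move=> psi Dpsi; have RApsi : op_range A (op_app A psi) by exists psi.
rewrite -Ax0 (ipC HiU) -(crp_adj HA) // ha (projB HiW HRA HP).
rewrite (ipDl HiW) (ipNl HiW) -(ip_proj HiW HP x0 RApsi) -(ip_proj HiW HP z RApsi).
by rewrite (ipDl HiW) (ipZl HiW) (ipC HiW (op_app A psi) x0); ring.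
Qed.

Lemma range_component_analysis :
  (exists xg, op_dom (red As A) xg /\ op_app As xg = g /\ a = xg - P z) /\
  op_app As (a + z) = g /\
  attains_min (op_dom As) (fun zeta => (c * nrU (op_app As zeta - g) + nrW (zeta - z)) ^+ 2)
    (nrW a ^+ 2) (a + z) /\
  (exists phi, op_dom (red A As) phi /\ op_app A phi = a /\
    attains_max (op_dom A)
      (fun phi => 2 * ipU g phi - ipW (2 *: z + op_app A phi) (op_app A phi))
      (nrW a ^+ 2) phi).
Proof.
split.
  have [DPx0 APx0] := adj_proj Dx0.
  exists (P x0); split; first by split=> //; apply: (proj_in HP).
  by rewrite APx0 Ax0 ha (projB HiW HRA HP).
split; first by case: range_component_adj.
by split; [exact: range_component_min | exact: range_component_max].
Qed.

Lemma range_component_analysis_of_range : op_range A x0 ->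
  a = x0 - P z /\ op_app As (a + z) = g /\
  attains_min (op_dom As) (fun zeta => (c * nrU (op_app As zeta - g) + nrW (zeta - z)) ^+ 2)
    (nrW a ^+ 2) (a + z) /\
  (exists phi, op_dom (red A As) phi /\ op_app A phi = a /\
    attains_max (op_dom A)
      (fun phi => 2 * ipU g phi - ipW (2 *: z + op_app A phi) (op_app A phi))
      (nrW a ^+ 2) phi).
Proof.
move=> Rx0; have [_ [Aaz [amin amax]]] := range_component_analysis.
by split=> //; rewrite ha (projB HiW HRA HP) (proj_id HiW HRA HP Rx0).
Qed.

End RangeComponent.

Lemma range_component_analysis_of_ker x0 z a : op_ker As x0 -> a = P (x0 - z) ->
  a = - P z /\ op_ker As (a + z) /\
  attains_min (op_dom As) (fun xi => (c * nrU (op_app As xi) + nrW (xi - z)) ^+ 2)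
    (nrW a ^+ 2) (a + z) /\
  attains_min (op_ker As) (fun xi => nrW (xi - z) ^+ 2) (nrW a ^+ 2) (a + z) /\
  (exists phi, op_dom (red A As) phi /\ op_app A phi = a /\
    attains_max (op_dom A) (fun phi => - ipW (2 *: z + op_app A phi) (op_app A phi))
      (nrW a ^+ 2) phi).
Proof.
move=> [Dx0 Ax0] ha.
have [Daz Aaz] := range_component_adj Dx0 Ax0 ha.
have amin := range_component_min Dx0 Ax0 ha.
have [phi [Rphi [Aphi amax]]] := range_component_max Dx0 Ax0 ha.
split; first by rewrite ha (projB HiW HRA HP) (proj_ker_adj (conj Dx0 Ax0)) sub0r.
split=> //; split.
  by apply: attains_min_eq amin => xi _; rewrite subr0.
split; last first.
  exists phi; split=> //; split=> //.
  by apply: attains_max_eq amax => psi _; rewrite (ip0l HiU) mulr0 sub0r.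
case: amin => _ [_ amin_le]; split; first by split.
split=> [|xi [Dxi Axi0]]; first by rewrite addrK.
by have := amin_le xi Dxi; rewrite Axi0 sub0r (hnormN HiU) (hnorm0 HiU) mulr0 add0r.
Qed.

End ClosedRangePairTheory.

Section CorangeComponent.
Variables (R : realType) (U W : lmodType R) (ipU : U -> U -> R) (ipW : W -> W -> R).
Variables (A : op U W) (As : op W U) (c : R).
Hypothesis HA : closed_range_pair ipU ipW A As c.
Variables (P : W -> W) (Q : U -> U).
Hypotheses (HP : is_orth_proj ipW (op_range A) P) (HQ : is_orth_proj ipU (op_range As) Q).
Variables (x f z a : U).
Hypotheses (Dx : op_dom A x) (DAx : op_dom As (op_app A x)).
Hypotheses (AsAx : op_app As (op_app A x) = f) (ha : a = Q (x - z)).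
Let HAs := closed_range_pair_sym HA.
Let HiU := crp_innerU HA.
Let HiW := crp_innerW HA.
Let HlA := crp_linear HA.
Let HlAs := crp_linear_adj HA.
Let HRA := op_range_subspace HlA.
Let HRAs := op_range_subspace HlAs.
Local Notation nrU := (hnorm ipU).
Local Notation nrW := (hnorm ipW).
Local Notation y := (op_app A x).
Local Notation AsA := (comp_op As A).

Lemma corange_component_dom : op_dom A (a + z) /\ op_app A (a + z) = y.
Proof.
have [Dr Ar0] := ker_adj_sub_proj HAs HQ (x - z).
have -> : a + z = x - (x - z - Q (x - z)).
  by rewrite ha opprB opprB addrCA (addrC x) subrK.
split; first exact: (subspaceB (op_dom_subspace HlA) Dx Dr).
by rewrite (op_appB HlA Dx Dr) Ar0 subr0.
Qed.

Lemma corange_component_le xi zeta : op_dom A xi -> op_dom As zeta ->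
  nrU a <= c ^+ 2 * nrU (op_app As zeta - f) + c * nrW (zeta - op_app A xi) + nrU (xi - z).
Proof.
move=> Dxi Dzeta.
have c_ge0 := ltW (crp_const_gt0 HA).
have Dxxi := subspaceB (op_dom_subspace HlA) Dx Dxi.
have Dyzeta := subspaceB (op_dom_subspace HlAs) DAx Dzeta.
have RAxi : op_range A (op_app A xi) by exists xi.
(* |Q (x - xi)| <= c |y - A xi| <= c (|P (y - zeta)| + |P zeta - A xi|) *)
have t1 := hnorm_proj_range_le HAs HQ Dxxi; rewrite (op_appB HlA Dx Dxi) in t1.
have t2 := hnorm_proj_range_le HA HP Dyzeta.
rewrite (op_appB HlAs DAx Dzeta) AsAx (hnorm_distC HiU) in t2.
have t3 := ler_hdistD HiW y (P zeta) (op_app A xi).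
have t4 := hnorm_proj_le HiW HP (zeta - op_app A xi).
rewrite (projB HiW HRA HP) (proj_id HiW HRA HP RAxi) in t4.
rewrite (projB HiW HRA HP) (proj_id HiW HRA HP (ex_intro _ x (conj Dx erefl))) in t2.
have -> : a = Q (x - xi) + Q (xi - z) by rewrite ha -(projD HiU HRAs HQ) addrA subrK.
have t5 := ler_hnormD HiU (Q (x - xi)) (Q (xi - z)).
have t6 := hnorm_proj_le HiU HQ (xi - z).
move: t1 t2 t3 t4 t5 t6.
set a1 := nrU (Q (x - xi)); set b1 := nrW (y - op_app A xi).
set b2 := nrW (y - P zeta); set b3 := nrW (P zeta - op_app A xi).
set N := nrU (op_app As zeta - f); set M := nrW (zeta - op_app A xi).
move=> t1 t2 t3 t4 t5 t6.
have : c * b1 <= c * (c * N + M) by apply: ler_wpM2l => //; lra.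
nra.
Qed.

Lemma corange_component_min_pair :
  attains_min (fun p : U * W => op_dom A p.1 /\ op_dom As p.2)
    (fun p => (c ^+ 2 * nrU (op_app As p.2 - f) + c * nrW (p.2 - op_app A p.1)
               + nrU (p.1 - z)) ^+ 2)
    (nrU a ^+ 2) (a + z, y).
Proof.
have [Daz Aaz] := corange_component_dom.
apply: (attains_min_sqr (F := fun p : U * W => c ^+ 2 * nrU (op_app As p.2 - f)
  + c * nrW (p.2 - op_app A p.1) + nrU (p.1 - z))) => //=.
- exact: hnorm_ge0.
- by rewrite AsAx Aaz !subrr (hnorm0 HiU) (hnorm0 HiW) !mulr0 !add0r addrK.
- by move=> [xi zeta] [/= Dxi Dzeta]; apply: corange_component_le.
Qed.

Lemma corange_component_min :
  attains_min (op_dom AsA) (fun xi => (c ^+ 2 * nrU (op_app AsA xi - f) + nrU (xi - z)) ^+ 2)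
    (nrU a ^+ 2) (a + z).
Proof.
have [Daz Aaz] := corange_component_dom.
apply: attains_min_sqr; first exact: hnorm_ge0.
- by split=> //=; rewrite Aaz.
- by rewrite /= Aaz AsAx subrr (hnorm0 HiU) mulr0 add0r addrK.
- move=> xi [/= Dxi DAxi]; have := corange_component_le Dxi DAxi.
  by rewrite subrr (hnorm0 HiW) mulr0 addr0.
Qed.

Lemma corange_component_max : exists psi phi,
  op_dom (red As A) psi /\ op_app As psi = a /\
  op_dom (red A As) phi /\ op_app A phi = psi /\
  attains_max (op_dom AsA)
    (fun phi => 2 * ipU f phi - ipU (2 *: z + op_app AsA phi) (op_app AsA phi))
    (nrU a ^+ 2) phi.
Proof.
have Ra : op_range As a by rewrite ha; apply: (proj_in HQ).
have [psi [Rpsi Apsi]] := crp_preimage_adj HA Ra.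
have [phi [Rphi Aphi]] := crp_preimage HA Rpsi.2.
exists psi, phi; do 4!split=> //.
apply: (attains_max_gap HiU (v := op_app AsA)) => /=.
- by split; [case: Rphi | rewrite Aphi; case: Rpsi].
- by rewrite Aphi.
move=> chi [/= Dchi DAchi]; have RAs : op_range As (op_app As (op_app A chi)).
  by exists (op_app A chi).
(* <f, chi> = <A x, A chi> = <x, As A chi> = <Q x, As A chi> *)
rewrite -AsAx (ipC HiU) -(crp_adj HA Dchi DAx) (ipC HiW) (crp_adj HA Dx DAchi).
rewrite ha (projB HiU HRAs HQ) (ipDl HiU) (ipNl HiU).
rewrite -(ip_proj HiU HQ x RAs) -(ip_proj HiU HQ z RAs) (ipDl HiU) (ipZl HiU); ring.
Qed.

Lemma corange_component_analysis :
  a = Q x - Q z /\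
  op_dom AsA (a + z) /\ op_app A (a + z) = y /\
  op_app AsA (a + z) = f /\ op_app As y = f /\
  attains_min (fun p : U * W => op_dom A p.1 /\ op_dom As p.2)
    (fun p => (c ^+ 2 * nrU (op_app As p.2 - f) + c * nrW (p.2 - op_app A p.1)
               + nrU (p.1 - z)) ^+ 2)
    (nrU a ^+ 2) (a + z, y) /\
  attains_min (op_dom AsA)
    (fun xi => (c ^+ 2 * nrU (op_app AsA xi - f) + nrU (xi - z)) ^+ 2)
    (nrU a ^+ 2) (a + z) /\
  (exists psi phi, op_dom (red As A) psi /\ op_app As psi = a /\
    op_dom (red A As) phi /\ op_app A phi = psi /\
    attains_max (op_dom AsA)
      (fun phi => 2 * ipU f phi - ipU (2 *: z + op_app AsA phi) (op_app AsA phi))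
      (nrU a ^+ 2) phi).
Proof.
have [Daz Aaz] := corange_component_dom.
split; first by rewrite ha (projB HiU HRAs HQ).
split; first by split=> //=; rewrite Aaz.
split=> //; split; first by rewrite /= Aaz.
split=> //; split; first exact: corange_component_min_pair.
by split; [exact: corange_component_min | exact: corange_component_max].
Qed.

End CorangeComponent.

Section HilbertComplex.
Variables (R : realType) (U V W : lmodType R).
Variables (ipU : U -> U -> R) (ipV : V -> V -> R) (ipW : W -> W -> R).
Variables (A : op U V) (As : op V U) (B : op V W) (Bs : op W V) (cA cB : R).
Hypotheses (HA : closed_range_pair ipU ipV A As cA) (HB : closed_range_pair ipV ipW B Bs cB).
Hypothesis Hcx : forall v, op_range A v -> op_ker B v.
Variables (PA PK PB : V -> V).
Hypotheses (HPA : is_orth_proj ipV (op_range A) PA) (HPK : is_orth_proj ipV (harm B As) PK).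
Hypothesis HPB : is_orth_proj ipV (op_range Bs) PB.
Let HiV := crp_innerW HA.
Let HRA := op_range_subspace (crp_linear HA).
Let HRB := op_range_subspace (crp_linear_adj HB).
Let HK : subspace (harm B As) :=
  subspaceI (op_ker_subspace (crp_linear HB)) (op_ker_subspace (crp_linear_adj HA)).
Local Notation nr := (hnorm ipV).

Lemma range_orth_corange a b : op_range A a -> op_range Bs b -> ipV a b = 0.
Proof.
move=> /Hcx [Da Ba0] [w [Dw <-]].
by rewrite -(crp_adj HB) // Ba0 (ip0l (crp_innerW HB)).
Qed.

Lemma range_orth_harm a k : op_range A a -> harm B As k -> ipV a k = 0.
Proof. by move=> Ra [_ Kk]; apply: (range_orth_ker_adj HA Ra Kk). Qed.

Lemma harm_orth_corange k b : harm B As k -> op_range Bs b -> ipV k b = 0.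
Proof.
move=> [Kk _] Rb; rewrite (ipC HiV).
exact: (range_orth_ker_adj (closed_range_pair_sym HB) Rb Kk).
Qed.

Lemma harm_of_orth v :
  orth ipV (op_range A) v -> orth ipV (op_range Bs) v -> harm B As v.
Proof. by move=> hA hB; split; [apply: (crp_ker HB) | apply: (crp_ker_adj HA)]. Qed.

Lemma hodge_decomposition v :
  v = PA v + PK v + PB v /\
  op_range A (PA v) /\ harm B As (PK v) /\ op_range Bs (PB v) /\
  nr v ^+ 2 = nr (PA v) ^+ 2 + nr (PK v) ^+ 2 + nr (PB v) ^+ 2.
Proof.
have RPA := proj_in HPA v; have KPK := proj_in HPK v; have RPB := proj_in HPB v.
set w := v - (PA v + PB v).
have Kw : harm B As w.
  apply: harm_of_orth => s Rs; rewrite /w (ipDl HiV) (ipNl HiV) (ipDl HiV).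
    by rewrite (ip_proj HiV HPA v Rs) (ipC HiV (PB v)) (range_orth_corange Rs RPB) addr0 subrr.
  by rewrite (ip_proj HiV HPB v Rs) (range_orth_corange RPA Rs) add0r subrr.
have PKv : PK v = w.
  apply: (proj_eq HiV HK HPK Kw) => k Kk.
  rewrite /w opprB addrC subrK (ipDl HiV) (range_orth_harm RPA Kk) add0r.
  by rewrite (ipC HiV) (harm_orth_corange Kk RPB).
have ev : v = PA v + PK v + PB v by rewrite PKv /w addrAC addrC subrK.
do 4!split=> //; rewrite {1}ev (hnorm_sqrD_orth HiV) ?(hnorm_sqrD_orth HiV) //.
  exact: range_orth_harm.
by rewrite (ipDl HiV) (range_orth_corange RPA RPB) (harm_orth_corange KPK RPB) addr0.
Qed.

Lemma proj_range_harm_shift k v z : harm B As k ->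
  PA (v - (k + z)) = PA (v - z) /\ PB (v - (k + z)) = PB (v - z).
Proof.
move=> Kk; rewrite opprD addrA.
have PAk : PA k = 0 by apply: (proj_eq0 HiV HRA HPA) => a Ra; rewrite (ipC HiV) range_orth_harm.
have PBk : PB k = 0 by apply: (proj_eq0 HiV HRB HPB) => b Rb; rewrite harm_orth_corange.
by split; rewrite ?(projB HiV HRA HPA) ?(projB HiV HRB HPB) ?PAk ?PBk subr0.
Qed.

Lemma harm_proj_range_eq0 phi : op_dom A phi -> PK (op_app A phi) = 0.
Proof.
move=> Dphi; apply: (proj_eq0 HiV HK HPK) => k Kk.
by apply: range_orth_harm => //; exists phi.
Qed.

Lemma harm_proj_corange_eq0 psi : op_dom Bs psi -> PK (op_app Bs psi) = 0.
Proof.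
move=> Dpsi; apply: (proj_eq0 HiV HK HPK) => k Kk.
by rewrite (ipC HiV); apply: harm_orth_corange => //; exists psi.
Qed.

Lemma harm_proj_sub_eq0 x k w : PK x = k -> harm B As k ->
  orth ipV (harm B As) w -> PK (x - (k + w)) = 0.
Proof.
move=> PKx Kk hw.
by rewrite (projB HiV HK HPK) (projD HiV HK HPK) PKx (proj_id HiV HK HPK Kk)
  (proj_eq0 HiV HK HPK hw) addr0 subrr.
Qed.

Lemma harm_proj_sub_orth_eq0 x w : PK x = 0 ->
  orth ipV (harm B As) w -> PK (x - w) = 0.
Proof.
move=> PKx hw; have := harm_proj_sub_eq0 PKx (subspace0 HK) hw.
by rewrite add0r.
Qed.

Lemma harm_residual w : exists phi psi,
  op_dom (red A As) phi /\ op_app A phi = PA w /\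
  op_dom (red Bs B) psi /\ op_app Bs psi = PB w /\
  op_app A phi + op_app Bs psi = w - PK w.
Proof.
have [phi [Rphi Aphi]] := crp_preimage HA (proj_in HPA w).
have [psi [Rpsi Apsi]] := crp_preimage_adj HB (proj_in HPB w).
exists phi, psi; do 4!split=> //.
have [ew _] := hodge_decomposition w.
by rewrite Aphi Apsi; apply/eqP; rewrite eq_sym subr_eq addrAC -ew.
Qed.

Lemma harm_component_min u phi psi : op_dom A phi -> op_dom Bs psi ->
  u + op_app A phi + op_app Bs psi = PK u ->
  attains_min (fun p : U * W => op_dom A p.1 /\ op_dom Bs p.2)
    (fun p => nr (u + op_app A p.1 + op_app Bs p.2) ^+ 2) (nr (PK u) ^+ 2) (phi, psi).
Proof.
move=> Dphi Dpsi hu.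
apply: (attains_min_sqr (F := fun p : U * W => nr (u + op_app A p.1 + op_app Bs p.2))).
- exact: hnorm_ge0.
- by [].
- by rewrite /= hu.
move=> [p1 p2] [/= D1 D2].
have <- : PK (u + op_app A p1 + op_app Bs p2) = PK u.
  by rewrite !(projD HiV HK HPK) harm_proj_range_eq0 ?harm_proj_corange_eq0 ?addr0.
exact: (hnorm_proj_le HiV HPK _).
Qed.

Lemma harm_component_max u :
  attains_max (harm B As) (fun t => ipV (2 *: u - t) t) (nr (PK u) ^+ 2) (PK u).
Proof.
apply: (attains_max_gap HiV (v := id)) => //; first exact: proj_in.
by move=> t Kt; rewrite (ipDl HiV) (ipNl HiV) (ipZl HiV) (ip_proj HiV HPK u Kt).
Qed.

Lemma harm_component_analysis k x w : harm B As k -> PK x = k ->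
  PK (x - w) = k - PK w /\
  (exists phi psi, op_dom (red A As) phi /\ op_app A phi = PA w /\
    op_dom (red Bs B) psi /\ op_app Bs psi = PB w /\
    op_app A phi + op_app Bs psi = w - PK w /\
    attains_min (fun p : U * W => op_dom A p.1 /\ op_dom Bs p.2)
      (fun p => nr (k - w + op_app A p.1 + op_app Bs p.2) ^+ 2)
      (nr (PK (x - w)) ^+ 2) (phi, psi)) /\
  attains_max (harm B As) (fun t => ipV (2 *: (k - w) - t) t)
    (nr (PK (x - w)) ^+ 2) (PK (x - w)).
Proof.
move=> Kk PKx.
have ePK : PK (x - w) = PK (k - w).
  by rewrite !(projB HiV HK HPK) PKx (proj_id HiV HK HPK Kk).
split; first by rewrite ePK (projB HiV HK HPK) (proj_id HiV HK HPK Kk).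
split; last by rewrite ePK; apply: harm_component_max.
have [phi [psi [Rphi [Aphi [Rpsi [Apsi hsum]]]]]] := harm_residual w.
exists phi, psi; do 5!split=> //; rewrite ePK.
apply: harm_component_min; [by case: Rphi | by case: Rpsi |].
by rewrite -addrA hsum addrA subrK (projB HiV HK HPK) (proj_id HiV HK HPK Kk).
Qed.

Lemma harm_component_analysis_opp x w : PK x = 0 ->
  PK (x - w) = - PK w /\
  (exists phi psi, op_dom (red A As) phi /\ op_app A phi = PA w /\
    op_dom (red Bs B) psi /\ op_app Bs psi = PB w /\
    op_app A phi + op_app Bs psi = w - PK w /\
    attains_min (fun p : U * W => op_dom A p.1 /\ op_dom Bs p.2)
      (fun p => nr (- w + op_app A p.1 + op_app Bs p.2) ^+ 2)
      (nr (PK (x - w)) ^+ 2) (phi, psi)) /\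
  attains_max (harm B As) (fun t => - ipV (2 *: w + t) t)
    (nr (PK (x - w)) ^+ 2) (PK (x - w)).
Proof.
move=> PKx; have [ePK [[phi [psi [Rphi [Aphi [Rpsi [Apsi [hsum hmin]]]]]]] hmax]] :=
  harm_component_analysis w (subspace0 HK) PKx.
rewrite sub0r in ePK; split=> //; split.
  exists phi, psi; do 5!(split=> //).
  by apply: attains_min_eq hmin => p _; rewrite sub0r.
apply: attains_max_eq hmax => t _.
by rewrite sub0r scalerN -opprD (ipNl HiV).
Qed.

End HilbertComplex.

Unset Implicit Arguments.

Theorem theorem4p7 (R : realType)
  (H0 H1 H2 H3 H4 : lmodType R)
  (ip0 : H0 -> H0 -> R) (ip1 : H1 -> H1 -> R) (ip2 : H2 -> H2 -> R)
  (ip3 : H3 -> H3 -> R) (ip4 : H4 -> H4 -> R)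
  (hH0 : is_hilbert ip0) (hH1 : is_hilbert ip1) (hH2 : is_hilbert ip2)
  (hH3 : is_hilbert ip3) (hH4 : is_hilbert ip4)
  (A0 : op H0 H1) (A1 : op H1 H2) (A2 : op H2 H3) (A3 : op H3 H4)
  (A0s : op H1 H0) (A1s : op H2 H1) (A2s : op H3 H2) (A3s : op H4 H3)
  (hA0 : dd_closed ip0 ip1 A0) (hA1 : dd_closed ip1 ip2 A1)
  (hA2 : dd_closed ip2 ip3 A2) (hA3 : dd_closed ip3 ip4 A3)
  (hA0s : is_adjoint ip0 ip1 A0 A0s) (hA1s : is_adjoint ip1 ip2 A1 A1s)
  (hA2s : is_adjoint ip2 ip3 A2 A2s) (hA3s : is_adjoint ip3 ip4 A3 A3s)
  (hc0 : forall z, op_range A0 z -> op_ker A1 z)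
  (hc1 : forall z, op_range A1 z -> op_ker A2 z)
  (hc2 : forall z, op_range A2 z -> op_ker A3 z)
  (hR1 : closed_set ip2 (op_range A1)) (hR2 : closed_set ip3 (op_range A2))
  (hR3 : closed_set ip4 (op_range A3))
  (hK2 : fin_dim (harm A2 A1s))
  (c1 c2 c3 : R)
  (hc1b : best_const ip1 ip2 A1 A1s c1) (hc2b : best_const ip2 ip3 A2 A2s c2)
  (hc3b : best_const ip3 ip4 A3 A3s c3)
  (PA1 PA2s P2 : H2 -> H2) (PA2 PA3s P3 : H3 -> H3)
  (hPA1 : is_orth_proj ip2 (op_range A1) PA1)
  (hPA2s : is_orth_proj ip2 (op_range A2s) PA2s)
  (hP2 : is_orth_proj ip2 (harm A2 A1s) P2)
  (hPA2 : is_orth_proj ip3 (op_range A2) PA2)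
  (hPA3s : is_orth_proj ip3 (op_range A3s) PA3s)
  (hP3 : is_orth_proj ip3 (harm A3 A2s) P3)
  (f : H2) (g : H1) (k : H2)
  (hf : op_range A2s f) (hg : op_range A1s g) (hk : harm A2 A1s k)
  (x : H2)
  (hxD : op_dom A2 x /\ op_dom A1s x /\ op_dom A2s (op_app A2 x))
  (hxf : op_app A2s (op_app A2 x) = f) (hxg : op_app A1s x = g) (hxk : P2 x = k)
  (xt : H2) (yt : H3) :
  let nrm1 := hnorm ip1 in let nrm2 := hnorm ip2 in
  let nrm3 := hnorm ip3 in let nrm4 := hnorm ip4 in
  let K2 := harm A2 A1s in let K3 := harm A3 A2s in
  let A2sA2 := comp_op A2s A2 in
  let y := op_app A2 x in
  let e := x - xt in let h := y - yt in
  let eA1 := PA1 e in let eA2s := PA2s e in let eK2 := P2 e in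
  let hA2 := PA2 h in let hA3s := PA3s h in let hK3 := P3 h in
  (* (i) *)
  (e = eA1 + eK2 + eA2s /\ op_range A1 eA1 /\ K2 eK2 /\ op_range A2s eA2s /\
   nrm2 e ^+ 2 = nrm2 eA1 ^+ 2 + nrm2 eK2 ^+ 2 + nrm2 eA2s ^+ 2 /\
   h = hA2 + hK3 + hA3s /\ op_range A2 hA2 /\ K3 hK3 /\ op_range A3s hA3s /\
   nrm3 h ^+ 2 = nrm3 hA2 ^+ 2 + nrm3 hK3 ^+ 2 + nrm3 hA3s ^+ 2) /\
  (* (ii) and (iii), with z = xt, or z = the K2-orthogonal part of xt
     when xt = k + z with z in K2^perp *)
  (forall z : H2, z = xt \/ (xt = k + z /\ orth ip2 K2 z) ->
   (* (ii) *)
   ((exists xg, op_dom (red A1s A1) xg /\ op_app A1s xg = g /\ eA1 = xg - PA1 z) /\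
    op_app A1s (eA1 + z) = g /\
    attains_min (op_dom A1s)
      (fun zeta => (c1 * nrm1 (op_app A1s zeta - g) + nrm2 (zeta - z)) ^+ 2)
      (nrm2 eA1 ^+ 2) (eA1 + z) /\
    (exists phi, op_dom (red A1 A1s) phi /\ op_app A1 phi = eA1 /\
      attains_max (op_dom A1)
        (fun phi => 2 * ip1 g phi - ip2 (2 *: z + op_app A1 phi) (op_app A1 phi))
        (nrm2 eA1 ^+ 2) phi)) /\
   (* (iii) *)
   (eA2s = PA2s x - PA2s z /\
    op_dom A2sA2 (eA2s + z) /\ op_app A2 (eA2s + z) = y /\
    op_app A2sA2 (eA2s + z) = f /\ op_app A2s y = f /\
    attains_min (fun p : H2 * H3 => op_dom A2 p.1 /\ op_dom A2s p.2)
      (fun p => (c2 ^+ 2 * nrm2 (op_app A2s p.2 - f) + c2 * nrm3 (p.2 - op_app A2 p.1)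
                 + nrm2 (p.1 - z)) ^+ 2)
      (nrm2 eA2s ^+ 2) (eA2s + z, y) /\
    attains_min (op_dom A2sA2)
      (fun xi => (c2 ^+ 2 * nrm2 (op_app A2sA2 xi - f) + nrm2 (xi - z)) ^+ 2)
      (nrm2 eA2s ^+ 2) (eA2s + z) /\
    (exists psi phi, op_dom (red A2s A2) psi /\ op_app A2s psi = eA2s /\
      op_dom (red A2 A2s) phi /\ op_app A2 phi = psi /\
      attains_max (op_dom A2sA2)
        (fun phi => 2 * ip2 f phi - ip2 (2 *: z + op_app A2sA2 phi) (op_app A2sA2 phi))
        (nrm2 eA2s ^+ 2) phi))) /\
  (* (iv) *)
  (eK2 = k - P2 xt /\
   (exists phi psi, op_dom (red A1 A1s) phi /\ op_app A1 phi = PA1 xt /\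
     op_dom (red A2s A2) psi /\ op_app A2s psi = PA2s xt /\
     op_app A1 phi + op_app A2s psi = xt - P2 xt /\
     attains_min (fun p : H1 * H3 => op_dom A1 p.1 /\ op_dom A2s p.2)
       (fun p => nrm2 (k - xt + op_app A1 p.1 + op_app A2s p.2) ^+ 2)
       (nrm2 eK2 ^+ 2) (phi, psi)) /\
   attains_max K2 (fun theta => ip2 (2 *: (k - xt) - theta) theta) (nrm2 eK2 ^+ 2) eK2) /\
  (* (v) *)
  (hA2 = y - PA2 yt /\ op_app A2s (hA2 + yt) = f /\
   attains_min (op_dom A2s)
     (fun zeta => (c2 * nrm2 (op_app A2s zeta - f) + nrm3 (zeta - yt)) ^+ 2)
     (nrm3 hA2 ^+ 2) (hA2 + yt) /\
   (exists phi, op_dom (red A2 A2s) phi /\ op_app A2 phi = hA2 /\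
     attains_max (op_dom A2)
       (fun phi => 2 * ip2 f phi - ip3 (2 *: yt + op_app A2 phi) (op_app A2 phi))
       (nrm3 hA2 ^+ 2) phi)) /\
  (* (vi) *)
  (hA3s = - PA3s yt /\ op_ker A3 (hA3s + yt) /\
   attains_min (op_dom A3)
     (fun xi => (c3 * nrm4 (op_app A3 xi) + nrm3 (xi - yt)) ^+ 2)
     (nrm3 hA3s ^+ 2) (hA3s + yt) /\
   attains_min (op_ker A3) (fun xi => nrm3 (xi - yt) ^+ 2) (nrm3 hA3s ^+ 2) (hA3s + yt) /\
   (exists phi, op_dom (red A3s A3) phi /\ op_app A3s phi = hA3s /\
     attains_max (op_dom A3s)
       (fun phi => - ip3 (2 *: yt + op_app A3s phi) (op_app A3s phi))
       (nrm3 hA3s ^+ 2) phi)) /\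
  (* (vii) *)
  (hK3 = - P3 yt /\
   (exists phi psi, op_dom (red A2 A2s) phi /\ op_app A2 phi = PA2 yt /\
     op_dom (red A3s A3) psi /\ op_app A3s psi = PA3s yt /\
     op_app A2 phi + op_app A3s psi = yt - P3 yt /\
     attains_min (fun p : H2 * H4 => op_dom A2 p.1 /\ op_dom A3s p.2)
       (fun p => nrm3 (- yt + op_app A2 p.1 + op_app A3s p.2) ^+ 2)
       (nrm3 hK3 ^+ 2) (phi, psi)) /\
   attains_max K3 (fun theta => - ip3 (2 *: yt + theta) theta) (nrm3 hK3 ^+ 2) hK3) /\
  (* final remarks *)
  (forall xp : H2, xt = k + xp -> orth ip2 K2 xp -> eK2 = 0) /\
  (orth ip3 K3 yt -> hK3 = 0).
Proof.
move=> nrm1 nrm2 nrm3 nrm4 K2 K3 A2sA2 y e h eA1 eA2s eK2 hA2' hA3s' hK3'.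
have pair1 := closed_range_pairP hH1 hH2 hA1 hA1s hR1 hc1b.
have pair2 := closed_range_pairP hH2 hH3 hA2 hA2s hR2 hc2b.
have pair3 := closed_range_pairP hH3 hH4 hA3 hA3s hR3 hc3b.
have [Dx [Dx1s Dy]] := hxD.
have Ry : op_range A2 y by exists x.
have P3y : P3 y = 0 := harm_proj_range_eq0 pair2 pair3 hP3 Dx.
split.
  have [e1 [e2 [e3 [e4 e5]]]] := hodge_decomposition pair1 pair2 hc1 hPA1 hP2 hPA2s e.
  have [h1 [h2 [h3 [h4 h5]]]] := hodge_decomposition pair2 pair3 hc2 hPA2 hP3 hPA3s h.
  by do ![assumption | split].
split.
  move=> z hz.
  have [eA1z eA2sz] : eA1 = PA1 (x - z) /\ eA2s = PA2s (x - z).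
    rewrite /eA1 /eA2s /e; case: hz => [-> | [-> _]] //.
    exact: (proj_range_harm_shift pair1 pair2 hPA1 hPA2s x z hk).
  split; first exact: (range_component_analysis pair1 hPA1 Dx1s hxg eA1z).
  exact: (corange_component_analysis pair2 hPA2 hPA2s Dx Dy hxf eA2sz).
split; first exact: (harm_component_analysis pair1 pair2 hc1 hPA1 hP2 hPA2s xt hk hxk).
split; first exact: (range_component_analysis_of_range pair2 hPA2 Dy hxf (erefl hA2') Ry).
split.
  exact: (range_component_analysis_of_ker (closed_range_pair_sym pair3) hPA3s
    (hc2 _ Ry) (erefl hA3s')).
split; first exact: (harm_component_analysis_opp pair2 pair3 hc2 hPA2 hP3 hPA3s yt P3y).
split=> [xp hxp xp_orth | yt_orth].
  by rewrite /eK2 /e hxp; exact: (harm_proj_sub_eq0 pair1 pair2 hP2 hxk hk xp_orth).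
exact: (harm_proj_sub_orth_eq0 pair2 pair3 hP3 P3y yt_orth).
Qed.
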